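(* Let $\mathcal{R}$ be a TRS and $\ell \to r$ a left-linear rewrite rule. Consider a local peak $\Gamma$ of the form $t \;{}_{\mathcal{R}}\!\overset{P}{\Leftarrow}\; s \xrightarrow{\epsilon}_{\{\ell \to r\}} u$, together with a fixed choice of the rules $\ell_p \to r_p \in \mathcal{R}$ used at the positions $p \in P$ in the parallel step $s \overset{P}{\Rightarrow}_\mathcal{R} t$. (a) If $\Gamma$ is orthogonal, then there exist a term $v$ and a set $P'$ of pairwise parallel positions such that $t = v$ or $t \xrightarrow{\epsilon}_{\{\ell\to r\}} v$, and $u \overset{P'}{\Rightarrow}_\mathcal{R} v$, and $\mathcal{V}ar(v,P') \subseteq \mathcal{V}ar(s,P)$. (b) If $\Gamma$ is not orthogonal, then there exist a parallel critical peak $t_0 \;{}_{\mathcal{R}}\!\overset{P_0}{\Leftarrow}\; s_0 \xrightarrow{\epsilon}_{\{\ell \to r\}} u_0$ between $\mathcal{R}$ and $\{\ell \to r\}$ and substitutions $\sigma$, $\tau$ such that $s = s_0\sigma$, $t = t_0\tau$, $u = u_0\sigma$, $\sigma \Rightarrow_\mathcal{R} \tau$, $t_0\sigma \overset{P\setminus P_0}{\Rightarrow}_\mathcal{R} t_0\tau$, and $P_0 \subseteq P$.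
   Context: Terms are built from a signature $\mathcal{F}$ and variables $\mathcal{V}$. A rule $\ell\to r$ requires $\ell\notin\mathcal{V}$ and $\mathcal{V}ar(r)\subseteq\mathcal{V}ar(\ell)$; a TRS is a set of rules, $\to_\mathcal{R}$ its rewrite relation, and $s \xrightarrow{p}_\mathcal{R} t$ denotes a step at position $p$ ($\epsilon$ is the root position). A rule is left-linear if no variable occurs twice in $\ell$. Positions $p,q$ are parallel if neither is a prefix of the other. $\mathcal{P}os_\mathcal{F}(t)$ is the set of positions of function symbols in $t$. Parallel step: for a set $P$ of pairwise parallel positions of $s$, $s \overset{P}{\Rightarrow}_\mathcal{R} t$ holds iff for every $p\in P$ there are a rule $\ell'\to r'\in\mathcal{R}$ and a substitution $\mu$ with $s|_p=\ell'\mu$ and $t|_p=r'\mu$, and $t$ coincides with $s$ outside the positions in $P$ (i.e. $t = s[t|_p]_{p\in P}$); $P=\varnothing$ gives $s=t$. $s\Rightarrow_\mathcal{R} t$ means $s \overset{P}{\Rightarrow}_\mathcal{R} t$ for some $P$, and $t \;{}_{\mathcal{R}}\!\overset{P}{\Leftarrow}\; s$ means $s \overset{P}{\Rightarrow}_\mathcal{R} t$. For substitutions, $\sigma\Rightarrow_\mathcal{R}\tau$ means $x\sigma\Rightarrow_\mathcal{R}x\tau$ for all variables $x$. $\mathcal{V}ar(t,P)=\bigcup_{p\in P}\mathcal{V}ar(t|_p)$. A local peak $t \;{}_{\mathcal{R}}\!\overset{P}{\Leftarrow}\; s \xrightarrow{\epsilon}_{\{\ell\to r\}} u$ using rule $\ell_p\to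 r_p$ at each $p\in P$ is orthogonal if either $P\cap\mathcal{P}os_\mathcal{F}(\ell)=\varnothing$, or $P=\{\epsilon\}$ and $\ell_\epsilon\to r_\epsilon$ is a variant of $\ell\to r$ (a variant is a rule obtained by a variable renaming). Parallel critical peak between TRSs $\mathcal{R}$ and $\mathcal{S}$: let $\ell\to r$ be a variant of an $\mathcal{S}$-rule, $P\subseteq\mathcal{P}os_\mathcal{F}(\ell)$ a non-empty set of pairwise parallel positions, and for each $p\in P$ let $\ell_p\to r_p$ be a variant of an $\mathcal{R}$-rule, such that none of the rules $\ell\to r$, $\ell_p\to r_p$ ($p\in P$) shares a variable with another, $\sigma$ is a most general unifier of $\{\ell_p\approx\ell|_p\}_{p\in P}$, and if $P=\{\epsilon\}$ then $\ell_\epsilon\to r_\epsilon$ is not a variant of $\ell\to r$. Then the peak $(\ell\sigma)[r_p\sigma]_{p\in P} \;{}_{\mathcal{R}}\!\overset{P}{\Leftarrow}\; \ell\sigma \xrightarrow{\epsilon}_\mathcal{S} r\sigma$ is a parallel critical peak between $\mathcal{R}$ and $\mathcal{S}$. *)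

From Stdlib Require Import List.
Import ListNotations.
Set Implicit Arguments.

Section TRS.
Context {F V : Type}.

(* Terms over function symbols F and variables V (function symbols are
   applied to lists of arguments; arities are not enforced). *)
Inductive term : Type :=
| Var : V -> term
| Fun : F -> list term -> term.

(* Positions: sequences of argument indices (0-based); [] is the root ε. *)
Definition pos := list nat.

Definition prefix (p q : pos) : Prop := exists r, q = p ++ r.
Definition parallel (p q : pos) : Prop := ~ prefix p q /\ ~ prefix q p.
Definition pairwise_parallel (P : pos -> Prop) : Prop :=
  forall p q, P p -> P q -> p <> q -> parallel p q.

Fixpoint subterm (t : term) (p : pos) : option term :=
  match p with
  | [] => Some t
  | i :: p' =>
      match t with
      | Var _ => None
      | Fun _ ts =>
          match nth_error ts i with
          | Some ti => subterm ti p'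
          | None => None
          end
      end
  end.

Definition posF (t : term) (p : pos) : Prop :=
  exists f ts, subterm t p = Some (Fun f ts).

Definition label (t : term) (p : pos) : option (V + (F * nat)) :=
  match subterm t p with
  | Some (Var x) => Some (inl x)
  | Some (Fun f ts) => Some (inr (f, length ts))
  | None => None
  end.

Fixpoint vars (t : term) : list V :=
  match t with
  | Var x => [x]
  | Fun _ ts => flat_map vars ts
  end.

Definition subst := V -> term.

Fixpoint app_subst (s : subst) (t : term) : term :=
  match t with
  | Var x => s x
  | Fun f ts => Fun f (map (app_subst s) ts)
  end.

Record rule : Type := mkRule { lhs : term; rhs : term }.

Definition wf_rule (rl : rule) : Prop :=
  (forall x, lhs rl <> Var x) /\
  (forall x, In x (vars (rhs rl)) -> In x (vars (lhs rl))).

Definition TRS (R : rule -> Prop) : Prop := forall rl, R rl -> wf_rule rl.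

Definition left_linear (rl : rule) : Prop := NoDup (vars (lhs rl)).

Definition variant (rl' rl : rule) : Prop :=
  exists (pi pi' : V -> V),
    (forall x, pi' (pi x) = x) /\ (forall x, pi (pi' x) = x) /\
    lhs rl' = app_subst (fun x => Var (pi x)) (lhs rl) /\
    rhs rl' = app_subst (fun x => Var (pi x)) (rhs rl).

Definition agree_outside (s t : term) (P : pos -> Prop) : Prop :=
  forall q, (forall p, P p -> ~ prefix p q) -> label s q = label t q.

Definition par_replace (s : term) (P : pos -> Prop) (f : pos -> term)
  (t : term) : Prop :=
  pairwise_parallel P /\
  (forall p, P p -> subterm s p <> None) /\
  (forall p, P p -> subterm t p = Some (f p)) /\
  agree_outside s t P.

Definition par_step_with (R : rule -> Prop) (P : pos -> Prop)
  (rho : pos -> rule) (s t : term) : Prop :=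
  pairwise_parallel P /\
  (forall p, P p -> R (rho p) /\
     exists mu, subterm s p = Some (app_subst mu (lhs (rho p))) /\
                subterm t p = Some (app_subst mu (rhs (rho p)))) /\
  agree_outside s t P.

Definition par_step (R : rule -> Prop) (P : pos -> Prop) (s t : term) : Prop :=
  exists rho, par_step_with R P rho s t.

Definition par_step_subst (R : rule -> Prop) (sg tau : subst) : Prop :=
  forall x, exists P, par_step R P (sg x) (tau x).

Definition root_step (rl : rule) (s u : term) : Prop :=
  exists mu, s = app_subst mu (lhs rl) /\ u = app_subst mu (rhs rl).

Definition vars_at (t : term) (P : pos -> Prop) (x : V) : Prop :=
  exists p t', P p /\ subterm t p = Some t' /\ In x (vars t').

Definition orthogonal_peak (rl : rule) (P : pos -> Prop) (rho : pos -> rule)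
  : Prop :=
  (forall p, P p -> ~ posF (lhs rl) p) \/
  ((forall p, P p <-> p = []) /\ variant (rho []) rl).

Definition rule_vars (rl : rule) (x : V) : Prop :=
  In x (vars (lhs rl)) \/ In x (vars (rhs rl)).

Definition unifies (P : pos -> Prop) (rho : pos -> rule) (l : term) (sg : subst)
  : Prop :=
  forall p, P p -> exists lp, subterm l p = Some lp /\
    app_subst sg (lhs (rho p)) = app_subst sg lp.

Definition is_mgu (P : pos -> Prop) (rho : pos -> rule) (l : term) (sg : subst)
  : Prop :=
  unifies P rho l sg /\
  forall th, unifies P rho l th ->
    exists de, forall x, th x = app_subst de (sg x).

Definition par_critical_peak (R S : rule -> Prop) (t0 : term) (P0 : pos -> Prop)
  (s0 u0 : term) : Prop :=
  exists (rl : rule) (rho : pos -> rule) (sg : subst),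
    (exists rl0, S rl0 /\ variant rl rl0) /\
    (exists p, P0 p) /\
    (forall p, P0 p -> posF (lhs rl) p) /\
    pairwise_parallel P0 /\
    (forall p, P0 p -> exists rl0, R rl0 /\ variant (rho p) rl0) /\
    (forall p x, P0 p -> rule_vars (rho p) x -> ~ rule_vars rl x) /\
    (forall p q x, P0 p -> P0 q -> p <> q ->
        rule_vars (rho p) x -> ~ rule_vars (rho q) x) /\
    is_mgu P0 rho (lhs rl) sg /\
    ((forall p, P0 p <-> p = []) -> ~ variant (rho []) rl) /\
    s0 = app_subst sg (lhs rl) /\
    par_replace s0 P0 (fun p => app_subst sg (rhs (rho p))) t0 /\
    u0 = app_subst sg (rhs rl).

End TRS.
Arguments term : clear implicits.

(* Let t ⇐^P_R s →^ε_{ℓ→r} u with ℓ left-linear, s = ℓμ and u = rμ.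

   The central tool is a decomposition lemma for parallel steps out of an
   instance ℓθ of a linear term: the redexes of the step either overlap a
   function position of ℓ, or lie inside the instance θx of a variable x of
   ℓ not below an overlap ("free" variable).  Linearity makes the parts
   independent, so the step factors as t = L θ' with L = ℓ[results of the
   overlapping redexes], θx ⇒ θ'x for free x, and θ' = θ elsewhere.

   (a) Orthogonal peaks.  If no redex overlaps ℓ, the decomposition gives
       t = ℓθ' →ε rθ' and u = rμ ⇒ rθ' (copying the steps μx ⇒ θ'x).  If
       both steps apply variants of the same rule at the root, t = u.
   (b) Non-orthogonal peaks.  Rename the overlapping rules apart (V is
       infinite), glue their matchers with μ into one substitution θ, which
       unifies the overlap problem; Robinson's theorem gives an mgu σ0 with
       θ = σ0δ.  The critical peak is the σ0-instance of the overlap, σ := δ,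
       and τ is θ' from the decomposition on free variables, δ elsewhere. *)

From Stdlib Require Import List Arith Lia.
From Stdlib Require Import ClassicalEpsilon FunctionalExtensionality PropExtensionality Classical.
Import ListNotations.

Section Terms.
Context {F V : Type}.
Local Notation tm := (term F V).

Definition dec (P : Prop) : {P} + {~ P} := excluded_middle_informative P.
Definition eqv (x y : V) : {x = y} + {x <> y} := dec (x = y).

Lemma term_ind' (Pr : tm -> Prop) :
  (forall x, Pr (Var x)) ->
  (forall f ts, (forall a, In a ts -> Pr a) -> Pr (Fun f ts)) ->
  forall t, Pr t.
Proof.
  intros HV HF. fix IH 1. intros [x|f ts].
  - apply HV.
  - apply HF. induction ts as [|a ts IHts]; intros b Hb.
    + destruct Hb.
    + destruct Hb as [<-|Hb]. apply IH. apply IHts, Hb.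
Qed.

Lemma pred_ext (P1 P2 : pos -> Prop) : (forall p, P1 p <-> P2 p) -> P1 = P2.
Proof.
  intros H. apply functional_extensionality. intros p.
  apply propositional_extensionality. apply H.
Qed.

Lemma subterm_app (t : tm) p q :
  subterm t (p ++ q) =
  match subterm t p with Some a => subterm a q | None => None end.
Proof.
  revert t; induction p as [|i p IH]; intros t; simpl; auto.
  destruct t; auto. destruct (nth_error l i); auto.
Qed.

Lemma app_subst_comp (s1 s2 : subst) (t : tm) :
  app_subst s2 (app_subst s1 t) = app_subst (fun x => app_subst s2 (s1 x)) t.
Proof.
  induction t using term_ind'; simpl; auto.
  f_equal. rewrite map_map. apply map_ext_in. auto.
Qed.

Lemma app_subst_ext (s1 s2 : subst) (t : tm) :
  (forall x, In x (vars t) -> s1 x = s2 x) -> app_subst s1 t = app_subst s2 t.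
Proof.
  induction t using term_ind'; simpl; intros Hx.
  - apply Hx; auto.
  - f_equal. apply map_ext_in. intros a Ha. apply H; auto.
    intros x Hxa. apply Hx. apply in_flat_map. eauto.
Qed.

Lemma app_subst_id (t : tm) : app_subst (@Var F V) t = t.
Proof.
  induction t using term_ind'; simpl; auto. f_equal.
  rewrite <- (map_id ts) at 2. apply map_ext_in. auto.
Qed.

Lemma vars_subst (sg : subst) (t : tm) z :
  In z (vars (app_subst sg t)) <-> exists y, In y (vars t) /\ In z (vars (sg y)).
Proof.
  induction t using term_ind'; simpl.
  - split. intros; exists x; auto. intros [y [[<-|[]] H]]; auto.
  - rewrite flat_map_concat_map, map_map, <- flat_map_concat_map.
    split.
    + intros Hz. apply in_flat_map in Hz as [a [Ha Hz]].
      apply H in Hz as [y [Hy Hz]]; auto.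
      exists y. split; auto. apply in_flat_map. eauto.
    + intros [y [Hy Hz]]. apply in_flat_map in Hy as [a [Ha Hy]]. apply in_flat_map.
      exists a. split; auto. apply H; eauto.
Qed.

Lemma subterm_subst (sg : subst) (t : tm) p a :
  subterm t p = Some a -> subterm (app_subst sg t) p = Some (app_subst sg a).
Proof.
  revert t; induction p as [|i p IH]; intros t H; simpl in *.
  - congruence.
  - destruct t as [x|f ts]; try discriminate. simpl.
    rewrite nth_error_map. destruct (nth_error ts i); simpl; try discriminate. auto.
Qed.

Lemma subterm_subst_var (sg : subst) (t : tm) q x r :
  subterm t q = Some (Var x) -> subterm (app_subst sg t) (q ++ r) = subterm (sg x) r.
Proof.
  intros H. rewrite subterm_app. erewrite subterm_subst; eauto. reflexivity.
Qed.

Lemma subterm_vars (t : tm) p a x :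
  subterm t p = Some a -> In x (vars a) -> In x (vars t).
Proof.
  revert t; induction p as [|i p IH]; intros t H Hx; simpl in *.
  - congruence.
  - destruct t as [y|f ts]; try discriminate.
    destruct (nth_error ts i) eqn:E; try discriminate. simpl. apply in_flat_map.
    exists t. split. eapply nth_error_In; eauto. eauto.
Qed.

Lemma var_pos (t : tm) x : In x (vars t) -> exists q, subterm t q = Some (Var x).
Proof.
  induction t using term_ind'; simpl; intros Hx.
  - destruct Hx as [<-|[]]. exists []. auto.
  - apply in_flat_map in Hx as [a [Ha Hx]]. destruct (H a Ha Hx) as [q Hq].
    apply In_nth_error in Ha as [i Hi]. exists (i :: q). simpl. rewrite Hi. auto.
Qed.

Lemma term_ext (s t : tm) : (forall q, label s q = label t q) -> s = t.
Proof.
  revert t. induction s as [x|f ts IH] using term_ind'; intros [y|g us] H;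
    pose proof (H []) as H0; unfold label in H0; simpl in H0; try congruence.
  inversion H0; subst. f_equal. apply nth_error_ext. intros i.
  assert (Hlen : forall A (l1 l2 : list A), length l1 = length l2 ->
            nth_error l1 i = None -> nth_error l2 i = None).
  { intros A l1 l2 Hl E. apply nth_error_None in E. apply nth_error_None. lia. }
  destruct (nth_error ts i) eqn:E1; destruct (nth_error us i) eqn:E2; auto.
  - f_equal. apply IH. eapply nth_error_In; eauto. intros q.
    specialize (H (i :: q)). unfold label in *. simpl in H. rewrite E1, E2 in H. auto.
  - rewrite (Hlen _ us ts) in E1; congruence.
  - rewrite (Hlen _ ts us) in E2; congruence.
Qed.

Lemma match_unique (l : tm) (m1 m2 : subst) :
  app_subst m1 l = app_subst m2 l -> forall x, In x (vars l) -> m1 x = m2 x.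
Proof.
  induction l as [y|f ts IH] using term_ind'; simpl; intros H x Hx.
  - destruct Hx as [<-|[]]. auto.
  - injection H as H. apply in_flat_map in Hx as [a [Ha Hx]]. apply (IH a Ha); auto.
    apply In_nth_error in Ha as [i Hi].
    assert (E1 := f_equal (fun l => nth_error l i) H). simpl in E1.
    rewrite !nth_error_map, Hi in E1. simpl in E1. congruence.
Qed.

Lemma glue_substs {I : Type} (D : V -> Prop) (X : I -> V -> Prop)
  (mu : @subst F V) (sg : I -> @subst F V) :
  (forall i z, X i z -> ~ D z) -> (forall i j z, X i z -> X j z -> i = j) ->
  exists th : @subst F V, (forall z, D z -> th z = mu z) /\
                     (forall i z, X i z -> th z = sg i z).
Proof.
  intros HD Huniq.
  exists (fun z => match dec (exists i, X i z) with
           | left H => sg (proj1_sig (constructive_indefinite_description _ H)) z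
           | right _ => mu z end).
  split.
  - intros z Hz. destruct (dec _) as [[i Hi]|_]; auto. exfalso. eapply HD; eauto.
  - intros i z Hi. destruct (dec _) as [H|H]; [|exfalso; eauto].
    destruct (constructive_indefinite_description _ H) as [j Hj]. simpl.
    rewrite (Huniq j i z); auto.
Qed.

End Terms.

Section ParallelRelation.
Context {F V : Type}.
Local Notation tm := (term F V).

(* The parallel
   rewrite step of the statement is the instance where Q p holds for pairs
   (ℓσ, rσ) of a rule; keeping Q abstract lets us shift Q along positions. *)
Definition par_rel (P : pos -> Prop) (Q : pos -> tm -> tm -> Prop) (s t : tm) : Prop :=
  pairwise_parallel P /\
  (forall p, P p -> exists a b, subterm s p = Some a /\ subterm t p = Some b /\ Q p a b) /\
  agree_outside s t P.

Lemma prefix_nil p : prefix [] p.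
Proof. exists p. reflexivity. Qed.

Lemma prefix_cons i j p q : prefix (i :: p) (j :: q) <-> i = j /\ prefix p q.
Proof.
  split.
  - intros [r Hr]. inversion Hr; subst. split; auto. exists r; auto.
  - intros [<- [r Hr]]. exists r. simpl. congruence.
Qed.

Lemma prefix_to_nil p : prefix p [] -> p = [].
Proof. intros [r Hr]. destruct p; auto. discriminate. Qed.

Lemma pairwise_parallel_root (P : pos -> Prop) :
  pairwise_parallel P -> P [] -> forall p, P p -> p = [].
Proof.
  intros H H0 p Hp. destruct p as [|i p]; auto. exfalso.
  destruct (H [] (i :: p) H0 Hp ltac:(discriminate)) as [H1 _]. apply H1, prefix_nil.
Qed.

Lemma pairwise_parallel_shift (P : pos -> Prop) i :
  pairwise_parallel P -> pairwise_parallel (fun q => P (i :: q)).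
Proof.
  intros H p q Hp Hq Hne. destruct (H _ _ Hp Hq ltac:(congruence)) as [H1 H2].
  split; intros H3; [apply H1|apply H2]; apply prefix_cons; auto.
Qed.

Lemma par_rel_nil (P : pos -> Prop) Q (s t : tm) :
  (forall p, ~ P p) -> (par_rel P Q s t <-> s = t).
Proof.
  intros HP. split.
  - intros [_ [_ H]]. apply term_ext. intros q. apply H. intros p Hp. exfalso. eapply HP; eauto.
  - intros <-. split; [|split].
    + intros p q Hp. exfalso; eapply HP; eauto.
    + intros p Hp. exfalso; eapply HP; eauto.
    + intros q _. reflexivity.
Qed.

Lemma par_rel_root (P : pos -> Prop) Q (s t : tm) : P [] ->
  (par_rel P Q s t <-> (forall p, P p -> p = []) /\ Q [] s t).
Proof.
  intros H0. split.
  - intros [Hpp [HQ _]]. split. apply pairwise_parallel_root; auto.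
    destruct (HQ [] H0) as [a [b [Ha [Hb HQ']]]]. simpl in *. congruence.
  - intros [Hall HQ]. split; [|split].
    + intros p q Hp Hq Hne. exfalso. apply Hne. rewrite (Hall p), (Hall q); auto.
    + intros p Hp. rewrite (Hall p Hp). exists s, t. auto.
    + intros q Hq. exfalso. apply (Hq [] H0). apply prefix_nil.
Qed.

Lemma par_rel_fun_inv (P : pos -> Prop) Q f (ts : list tm) t : ~ P [] ->
  par_rel P Q (Fun f ts) t ->
  exists ts', t = Fun f ts' /\ length ts' = length ts /\
    (forall i q, P (i :: q) -> i < length ts) /\
    (forall i a b, nth_error ts i = Some a -> nth_error ts' i = Some b ->
       par_rel (fun q => P (i :: q)) (fun q => Q (i :: q)) a b).
Proof.
  intros H0 [Hpp [HQ Hag]].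
  assert (Hl := Hag [] ltac:(intros p Hp Hpre; apply prefix_to_nil in Hpre; subst; auto)).
  unfold label in Hl. simpl in Hl.
  destruct t as [y|g ts']; simpl in Hl; try discriminate. inversion Hl; subst.
  exists ts'. split; auto. split; auto. split.
  - intros i q Hp. destruct (HQ _ Hp) as [a [b [Ha _]]]. simpl in Ha.
    destruct (nth_error ts i) eqn:E; try discriminate. apply nth_error_Some. congruence.
  - intros i a b Ha Hb. split; [|split].
    + apply pairwise_parallel_shift; auto.
    + intros p Hp. destruct (HQ _ Hp) as [a' [b' [Ha' [Hb' HQ']]]]. simpl in Ha', Hb'.
      rewrite Ha in Ha'. rewrite Hb in Hb'. eauto.
    + intros q Hq. specialize (Hag (i :: q)). unfold label in *. simpl in Hag.
      rewrite Ha, Hb in Hag. apply Hag. intros [|j p] Hp Hpre; auto.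
      apply prefix_cons in Hpre as [<- Hpre]. eapply Hq; eauto.
Qed.

Lemma par_rel_fun_intro (P : pos -> Prop) Q f (ts ts' : list tm) :
  ~ P [] -> length ts' = length ts -> (forall i q, P (i :: q) -> i < length ts) ->
  (forall i a b, nth_error ts i = Some a -> nth_error ts' i = Some b ->
     par_rel (fun q => P (i :: q)) (fun q => Q (i :: q)) a b) ->
  par_rel P Q (Fun f ts) (Fun f ts').
Proof.
  intros H0 Hlen Hrange Hsub.
  assert (Hnth : forall i, i < length ts ->
            exists a b, nth_error ts i = Some a /\ nth_error ts' i = Some b).
  { intros i Hi. destruct (nth_error ts i) eqn:E1; [|apply nth_error_None in E1; lia].
    destruct (nth_error ts' i) eqn:E2; [|apply nth_error_None in E2; lia]. eauto. }
  split; [|split].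
  - intros [|i p] [|j q] Hp Hq Hne; try contradiction.
    destruct (Nat.eq_dec i j) as [<-|Hij].
    + destruct (Hnth i (Hrange _ _ Hp)) as [a [b [Ha Hb]]].
      destruct (Hsub _ _ _ Ha Hb) as [Hpp _].
      destruct (Hpp p q Hp Hq ltac:(congruence)) as [H1 H2].
      split; intros H3; apply prefix_cons in H3 as [_ H3]; auto.
    + split; intros H3; apply prefix_cons in H3 as [H3 _]; auto.
  - intros [|i p] Hp; try contradiction.
    destruct (Hnth i (Hrange _ _ Hp)) as [a [b [Ha Hb]]].
    destruct (Hsub _ _ _ Ha Hb) as [_ [HQ _]]. simpl. rewrite Ha, Hb. auto.
  - intros [|i q] Hq; unfold label; simpl; [rewrite Hlen; auto|].
    destruct (nth_error ts i) eqn:E1; destruct (nth_error ts' i) eqn:E2.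
    + destruct (Hsub _ _ _ E1 E2) as [_ [_ Hag]]. apply Hag.
      intros p Hp Hpre. apply (Hq (i :: p) Hp). apply prefix_cons; auto.
    + apply nth_error_None in E2. assert (i < length ts) by (apply nth_error_Some; congruence). lia.
    + apply nth_error_None in E1.
      assert (i < length ts') by (apply nth_error_Some; congruence). lia.
    + reflexivity.
Qed.

Lemma par_rel_mono (P : pos -> Prop) (Q1 Q2 : pos -> tm -> tm -> Prop) s t :
  (forall p a b, P p -> Q1 p a b -> Q2 p a b) -> par_rel P Q1 s t -> par_rel P Q2 s t.
Proof.
  intros H [H1 [H2 H3]]. split; [|split]; auto.
  intros p Hp. destruct (H2 p Hp) as [a [b [Ha [Hb HQ]]]]. eauto 6.
Qed.

Lemma par_rel_ext (P1 P2 : pos -> Prop) Q (s t : tm) :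
  (forall p, P1 p <-> P2 p) -> par_rel P1 Q s t -> par_rel P2 Q s t.
Proof. intros H. rewrite (pred_ext P1 P2 H). auto. Qed.

Lemma par_rel_subst (Q : tm -> tm -> Prop) (Px : V -> pos -> Prop)
  (th th' : subst) (r : tm) :
  (forall x, In x (vars r) -> par_rel (Px x) (fun _ => Q) (th x) (th' x)) ->
  par_rel (fun p => exists q x r', p = q ++ r' /\ subterm r q = Some (Var x) /\ Px x r')
     (fun _ => Q) (app_subst th r) (app_subst th' r).
Proof.
  induction r as [x|f ts IH] using term_ind'; intros H.
  - eapply par_rel_ext; [|apply H; simpl; auto]. intros p. split.
    + intros Hp. exists [], x, p. auto.
    + intros [q [y [r' [-> [Hq Hr]]]]]. destruct q; simpl in Hq; try discriminate.
      inversion Hq; subst. auto.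
  - simpl. apply par_rel_fun_intro.
    + intros [q [y [r' [Hq [Hs _]]]]]. destruct q; simpl in *; discriminate.
    + now rewrite !length_map.
    + intros i q [q0 [y [r' [Hq [Hs _]]]]]. rewrite length_map.
      destruct q0 as [|j q0]; simpl in Hs; try discriminate.
      simpl in Hq; injection Hq as Hij Hq'; subst j.
      destruct (nth_error ts i) eqn:E; try discriminate. apply nth_error_Some. congruence.
    + intros i a b Ha Hb. rewrite nth_error_map in Ha, Hb.
      destruct (nth_error ts i) as [c|] eqn:E; simpl in Ha, Hb; try discriminate.
      inversion Ha; inversion Hb; subst.
      eapply par_rel_ext; [|apply (IH c)].
      * intros p. split.
        -- intros [q [y [r' [-> [Hs Hp]]]]]. exists (i :: q), y, r'. simpl. rewrite E. auto.
        -- intros [q [y [r' [Hq [Hs Hp]]]]]. destruct q as [|j q]; simpl in Hs; try discriminate.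
           simpl in Hq; injection Hq as Hij Hq'; subst j. rewrite E in Hs. exists q, y, r'. auto.
      * eapply nth_error_In; eauto.
      * intros x Hx. apply H. simpl. apply in_flat_map.
        exists c. split; auto. eapply nth_error_In; eauto.
Qed.

Fixpoint mapi {A B : Type} (f : nat -> A -> B) (k : nat) (l : list A) : list B :=
  match l with [] => [] | a :: l' => f k a :: mapi f (S k) l' end.

Lemma nth_error_mapi {A B : Type} (f : nat -> A -> B) k l i :
  nth_error (mapi f k l) i = option_map (f (k + i)) (nth_error l i).
Proof.
  revert k i; induction l as [|a l IH]; intros k [|i]; simpl; auto.
  - rewrite Nat.add_0_r. auto.
  - rewrite IH. f_equal. f_equal. lia.
Qed.

Lemma length_mapi {A B : Type} (f : nat -> A -> B) k l : length (mapi f k l) = length l.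
Proof. revert k; induction l; simpl; auto. Qed.

(* Simultaneous replacement  l[g p]_{p ∈ P}  (meaningful for parallel P). *)
Fixpoint repl (P : pos -> Prop) (g : pos -> tm) (t : tm) : tm :=
  if dec (P []) then g [] else
  match t with
  | Var x => Var x
  | Fun f ts =>
      Fun f (mapi (fun i a => repl (fun q => P (i :: q)) (fun q => g (i :: q)) a) 0 ts)
  end.

Lemma repl_root (P : pos -> Prop) g (t : tm) : P [] -> repl P g t = g [].
Proof. intros H. destruct t; simpl; destruct (dec (P [])); tauto. Qed.

Lemma repl_var (P : pos -> Prop) g x : ~ P [] -> repl P g (Var x) = Var x.
Proof. intros H. simpl; destruct (dec (P [])); tauto. Qed.

Lemma repl_fun (P : pos -> Prop) g f ts : ~ P [] ->
  repl P g (Fun f ts) =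
  Fun f (mapi (fun i a => repl (fun q => P (i :: q)) (fun q => g (i :: q)) a) 0 ts).
Proof. intros H. simpl; destruct (dec (P [])); tauto. Qed.

Lemma repl_none (P : pos -> Prop) g (t : tm) : (forall p, ~ P p) -> repl P g t = t.
Proof.
  revert P g. induction t as [x|f ts IH] using term_ind'; intros P g HP.
  - apply repl_var. auto.
  - rewrite repl_fun; auto. f_equal. apply nth_error_ext. intros i.
    rewrite nth_error_mapi. simpl. destruct (nth_error ts i) eqn:E; simpl; auto.
    f_equal. apply IH. eapply nth_error_In; eauto. intros p. apply HP.
Qed.

Lemma vars_repl (P : pos -> Prop) g (t : tm) x :
  In x (vars (repl P g t)) -> In x (vars t) \/ exists p, P p /\ In x (vars (g p)).
Proof.
  revert P g. induction t as [y|f ts IH] using term_ind'; intros P g Hx;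
    (destruct (dec (P [])); [rewrite repl_root in Hx; eauto|]).
  - rewrite repl_var in Hx; auto.
  - rewrite repl_fun in Hx; auto.
    simpl in Hx. apply in_flat_map in Hx as [b [Hb Hx]].
    apply In_nth_error in Hb as [i Hi]. rewrite nth_error_mapi in Hi. simpl in Hi.
    destruct (nth_error ts i) as [c|] eqn:E; simpl in Hi; try discriminate. injection Hi as <-.
    apply IH in Hx as [Hx|[p [Hp Hx]]].
    + left. simpl. apply in_flat_map. exists c. split; auto. eapply nth_error_In; eauto.
    + right. exists (i :: p). auto.
    + eapply nth_error_In; eauto.
Qed.

Lemma par_rel_repl (P0 : pos -> Prop) (g : pos -> tm) (sg : subst) (l : tm) :
  (forall p, P0 p -> posF l p) -> pairwise_parallel P0 ->
  par_rel P0 (fun p a b => b = app_subst sg (g p))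
    (app_subst sg l) (app_subst sg (repl P0 g l)).
Proof.
  revert P0 g. induction l as [x|f ts IH] using term_ind'; intros P0 g HF Hpp.
  - assert (HP : forall p, ~ P0 p).
    { intros p Hp. destruct (HF p Hp) as [f [ts Hs]]. destruct p; simpl in Hs; discriminate. }
    rewrite repl_none; auto. apply par_rel_nil; auto.
  - destruct (dec (P0 [])) as [H0|H0].
    + rewrite repl_root; auto. apply par_rel_root; auto.
      split; auto. apply pairwise_parallel_root; auto.
    + rewrite repl_fun; auto. simpl. apply par_rel_fun_intro; auto.
      * rewrite length_map, length_mapi, length_map. auto.
      * intros i q Hp. destruct (HF _ Hp) as [f' [ts' Hs]]. simpl in Hs.
        rewrite length_map. destruct (nth_error ts i) eqn:E; try discriminate.
        apply nth_error_Some. congruence.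
      * intros i a b Ha Hb. rewrite nth_error_map in Ha, Hb.
        rewrite nth_error_mapi in Hb. simpl in Hb.
        destruct (nth_error ts i) as [c|] eqn:E; simpl in Ha, Hb; try discriminate.
        injection Ha as <-. injection Hb as <-. apply IH.
        -- eapply nth_error_In; eauto.
        -- intros p Hp. destruct (HF _ Hp) as [f' [ts' Hs]]. simpl in Hs.
           rewrite E in Hs. exists f', ts'. auto.
        -- apply pairwise_parallel_shift; auto.
Qed.

End ParallelRelation.

Section LinearDecomposition.
Context {F V : Type}.
Local Notation tm := (term F V).

Definition isfun (t : tm) : Prop := exists f ts, t = Fun f ts.

Definition overlap (l : tm) (P : pos -> Prop) (p : pos) : Prop := P p /\ posF l p.

Definition free (l : tm) (P : pos -> Prop) (x : V) : Prop :=
  In x (vars l) /\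
  forall p lp, P p -> subterm l p = Some lp -> isfun lp -> ~ In x (vars lp).

Lemma nodup_app_disj {A : Type} (l1 l2 : list A) x :
  NoDup (l1 ++ l2) -> In x l1 -> In x l2 -> False.
Proof.
  induction l1 as [|a l1 IH]; simpl; intros H H1 H2; auto.
  inversion H; subst. destruct H1 as [<-|H1].
  - apply H4. apply in_or_app. auto.
  - eauto.
Qed.

Lemma vars_nth (ls : list tm) i a x :
  nth_error ls i = Some a -> In x (vars a) -> In x (flat_map vars ls).
Proof. intros H Hx. apply in_flat_map. exists a. split; auto. eapply nth_error_In; eauto. Qed.

Lemma linear_args_disjoint (ls : list tm) i j a b x :
  NoDup (flat_map vars ls) -> nth_error ls i = Some a -> nth_error ls j = Some b ->
  In x (vars a) -> In x (vars b) -> i = j.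
Proof.
  revert i j; induction ls as [|c ls IH]; intros [|i] [|j] Hnd Ha Hb Hxa Hxb; simpl in *;
    try discriminate; auto.
  - injection Ha as <-. exfalso. eapply nodup_app_disj; eauto. eapply vars_nth; eauto.
  - injection Hb as <-. exfalso. eapply nodup_app_disj; eauto. eapply vars_nth; eauto.
  - f_equal. eapply IH; eauto. eapply NoDup_app_remove_l; eauto.
Qed.

Lemma linear_arg (ls : list tm) i a :
  NoDup (flat_map vars ls) -> nth_error ls i = Some a -> NoDup (vars a).
Proof.
  revert i; induction ls as [|c ls IH]; intros [|i] Hnd Ha; simpl in *; try discriminate.
  - injection Ha as <-. eapply NoDup_app_remove_r; eauto.
  - eapply IH; eauto. eapply NoDup_app_remove_l; eauto.
Qed.

Lemma posF_cons f ls i (a : tm) p :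
  nth_error ls i = Some a -> (posF (Fun f ls) (i :: p) <-> posF a p).
Proof. intros E. unfold posF. simpl. rewrite E. tauto. Qed.

Lemma free_arg f (ls : list tm) (P : pos -> Prop) i a x :
  NoDup (flat_map vars ls) -> ~ P [] -> nth_error ls i = Some a -> In x (vars a) ->
  free (Fun f ls) P x <-> free a (fun q => P (i :: q)) x.
Proof.
  intros Hnd H0 Ea Hxa. split.
  - intros [_ Hfr]. split; auto. intros p lp Hp Hs Hf. apply (Hfr (i :: p)); auto.
    simpl. rewrite Ea. auto.
  - intros [_ Hfr]. split; [simpl; eapply vars_nth; eauto|].
    intros [|j p] lp Hp Hs Hf Hxl; [contradiction|]. simpl in Hs.
    destruct (nth_error ls j) as [b|] eqn:Eb; try discriminate.
    destruct (Nat.eq_dec i j) as [<-|Hij].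
    + rewrite Ea in Eb. injection Eb as <-. eapply Hfr; eauto.
    + apply Hij. eapply linear_args_disjoint; eauto. eapply subterm_vars; eauto.
Qed.

Lemma repl_overlap_fun (P : pos -> Prop) (g : pos -> tm) f ls : ~ P [] ->
  repl (overlap (Fun f ls) P) g (Fun f ls) =
  Fun f (mapi (fun i a => repl (overlap a (fun q => P (i :: q))) (fun q => g (i :: q)) a) 0 ls).
Proof.
  intros H0. rewrite repl_fun by (intros [Hp _]; auto). f_equal.
  apply nth_error_ext. intros i. rewrite !nth_error_mapi. simpl.
  destruct (nth_error ls i) as [a|] eqn:Ea; simpl; auto. do 2 f_equal.
  apply pred_ext. intros p. unfold overlap. rewrite (posF_cons f ls i a p Ea). tauto.
Qed.

(* The outcome of the decomposition lemma below: a parallel Q-step from lθ to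
   t, where the overlapped redexes produce θ(g p), factors as
   - t = θ'(L) with L = l[g p]_{p overlapping} and θ' = θ except on free vars,
   - a parallel step θ(L) ⇒ θ'(L) at the non-overlapping redexes,
   - a parallel step θx ⇒ θ'x for each free variable x of l. *)
Definition decomposes (l : tm) (P : pos -> Prop) (Q : pos -> tm -> tm -> Prop)
  (g : pos -> tm) (th th' : subst) (t : tm) : Prop :=
  (forall x, ~ free l P x -> th' x = th x) /\
  t = app_subst th' (repl (overlap l P) g l) /\
  par_rel (fun p => P p /\ ~ posF l p) Q
    (app_subst th (repl (overlap l P) g l)) (app_subst th' (repl (overlap l P) g l)) /\
  (forall x q, subterm l q = Some (Var x) -> free l P x ->
     par_rel (fun r => P (q ++ r)) (fun r => Q (q ++ r)) (th x) (th' x)).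

Lemma decompose_var x (P : pos -> Prop) Q g (th : subst) t :
  par_rel P Q (th x) t -> exists th', decomposes (Var x) P Q g th th' t.
Proof.
  intros Hpr.
  assert (HnF : forall p, ~ posF (Var x : tm) p).
  { intros [|i p] [f [ts Hs]]; simpl in Hs; discriminate. }
  assert (Hrepl : repl (overlap (Var x) P) g (Var x) = Var x).
  { apply repl_var. intros [_ H]. eapply HnF; eauto. }
  exists (fun y => if eqv y x then t else th y). unfold decomposes. rewrite Hrepl. simpl.
  destruct (eqv x x) as [_|]; [|congruence]. split; [|split; [|split]]; auto.
  - intros y Hy. destruct (eqv y x) as [->|]; auto. exfalso. apply Hy. split. simpl; auto.
    intros p lp _ Hs [f [ts ->]]. destruct p; simpl in Hs; discriminate.
  - eapply par_rel_ext; [|exact Hpr]. intros p. split; [intros H; split; auto; apply HnF | tauto].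
  - intros y q Hs _. destruct q; simpl in Hs; try discriminate. injection Hs as Hxy. subst y.
    destruct (eqv x x); [exact Hpr|congruence].
Qed.

Lemma decompose_root f ls (P : pos -> Prop) (Q : pos -> tm -> tm -> Prop) g (th : subst) t :
  P [] -> par_rel P Q (app_subst th (Fun f ls)) t ->
  (Q [] (app_subst th (Fun f ls)) t -> t = app_subst th (g [])) ->
  decomposes (Fun f ls) P Q g th th t.
Proof.
  intros H0 Hpr Hg. apply par_rel_root in Hpr as [Hall HQ]; auto.
  assert (HF0 : posF (Fun f ls) []) by (exists f, ls; reflexivity).
  unfold decomposes. rewrite repl_root by (split; auto).
  split; [|split; [|split]]; auto.
  - apply par_rel_nil; auto. intros p [Hp Hn]. rewrite (Hall p Hp) in Hn. auto.
  - intros x q _ [Hx Hfr]. exfalso. eapply Hfr; eauto. reflexivity. exists f, ls; auto.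
Qed.

Section GluedDecomposition.
Variables (f : F) (ls ts' : list tm) (P : pos -> Prop) (Q : pos -> tm -> tm -> Prop)
  (g : pos -> tm) (th th' : @subst F V) (Th : nat -> @subst F V).
Hypothesis H0 : ~ P [].
Hypothesis Hnd : NoDup (flat_map vars ls).
Hypothesis Hfresh :
  forall p x, overlap (Fun f ls) P p -> In x (vars (g p)) -> ~ In x (flat_map vars ls).
Hypothesis Hlen : length ts' = length ls.
Hypothesis HTh : forall i a b, nth_error ls i = Some a -> nth_error ts' i = Some b ->
  decomposes a (fun q => P (i :: q)) (fun q => Q (i :: q)) (fun q => g (i :: q)) th (Th i) b.
Hypothesis Hin : forall i z, (exists a, nth_error ls i = Some a /\ In z (vars a)) ->
  th' z = Th i z.
Hypothesis Hout : forall z, ~ In z (flat_map vars ls) -> th' z = th z.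

Local Notation Li i a := (repl (overlap a (fun q => P (i :: q))) (fun q => g (i :: q)) a).

Lemma result_arg i a : nth_error ls i = Some a -> exists b, nth_error ts' i = Some b.
Proof.
  intros Ea. destruct (nth_error ts' i) eqn:Eb; eauto.
  apply nth_error_None in Eb. assert (i < length ls) by (apply nth_error_Some; congruence). lia.
Qed.

Lemma glued_agree i a : nth_error ls i = Some a ->
  app_subst th' (Li i a) = app_subst (Th i) (Li i a).
Proof.
  intros Ea. destruct (result_arg i a Ea) as [b Eb].
  apply app_subst_ext. intros x Hx.
  apply vars_repl in Hx as [Hx|[p [[Hp HpF] Hx]]]; [apply Hin; eauto|].
  assert (Hxl : ~ In x (flat_map vars ls)).
  { apply (Hfresh (i :: p)); auto. split; auto. apply (posF_cons f ls i a p Ea); auto. }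
  rewrite Hout by auto. symmetry. apply (proj1 (HTh i a b Ea Eb)).
  intros [Hxa _]. apply Hxl. eapply vars_nth; eauto.
Qed.

Lemma glued_outside x : ~ free (Fun f ls) P x -> th' x = th x.
Proof.
  intros Hx. destruct (dec (exists i a, nth_error ls i = Some a /\ In x (vars a)))
    as [[i [a [Ea Hxa]]]|Hn].
  - destruct (result_arg i a Ea) as [b Eb]. rewrite (Hin i x) by eauto.
    apply (proj1 (HTh i a b Ea Eb)).
    intros Hfa. apply Hx. apply (free_arg f ls P i a x); auto.
  - apply Hout. intros Hx'. apply in_flat_map in Hx' as [a [Ha Hxa]].
    apply In_nth_error in Ha as [i Ea]. eauto.
Qed.

Lemma glued_result :
  Fun f ts' = app_subst th' (Fun f (mapi (fun i a => Li i a) 0 ls)).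
Proof.
  simpl. f_equal. apply nth_error_ext. intros i.
  rewrite nth_error_map, nth_error_mapi. simpl.
  destruct (nth_error ls i) as [a|] eqn:Ea; simpl.
  - destruct (result_arg i a Ea) as [b Eb]. rewrite Eb. f_equal.
    rewrite (glued_agree i a Ea). apply (HTh i a b Ea Eb).
  - apply nth_error_None. apply nth_error_None in Ea. lia.
Qed.

Lemma glued_step : (forall i q, P (i :: q) -> i < length ls) ->
  par_rel (fun p => P p /\ ~ posF (Fun f ls) p) Q
    (app_subst th (Fun f (mapi (fun i a => Li i a) 0 ls)))
    (app_subst th' (Fun f (mapi (fun i a => Li i a) 0 ls))).
Proof.
  intros Hrange. simpl.
  apply par_rel_fun_intro; [tauto| |intros i q [Hp _]; rewrite length_map, length_mapi; eauto|].
  - now rewrite !length_map.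
  - intros i a' b' Ha' Hb'. rewrite nth_error_map, nth_error_mapi in Ha', Hb'.
    simpl in Ha', Hb'.
    destruct (nth_error ls i) as [a|] eqn:Ea; simpl in Ha', Hb'; try discriminate.
    injection Ha' as <-. injection Hb' as <-. destruct (result_arg i a Ea) as [b Eb].
    rewrite (glued_agree i a Ea). eapply par_rel_ext; [|apply (HTh i a b Ea Eb)].
    intros p. rewrite (posF_cons f ls i a p Ea). reflexivity.
Qed.

Lemma glued_free x q : subterm (Fun f ls) q = Some (Var x) -> free (Fun f ls) P x ->
  par_rel (fun r => P (q ++ r)) (fun r => Q (q ++ r)) (th x) (th' x).
Proof.
  destruct q as [|i q]; intros Hs Hfr; simpl in Hs; try discriminate.
  destruct (nth_error ls i) as [a|] eqn:Ea; try discriminate.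
  destruct (result_arg i a Ea) as [b Eb].
  assert (Hxa : In x (vars a)) by (eapply subterm_vars; eauto; simpl; auto).
  rewrite (Hin i x) by eauto. apply (HTh i a b Ea Eb); auto.
  apply (free_arg f ls P i a x); auto.
Qed.

End GluedDecomposition.

(* Below the root, decompositions of the arguments of a linear f(ls) glue
   together, because distinct arguments share no variables. *)
Lemma decompose_fun f ls (P : pos -> Prop) (Q : pos -> tm -> tm -> Prop) g (th : subst) t :
  ~ P [] -> NoDup (flat_map vars ls) ->
  (forall p x, overlap (Fun f ls) P p -> In x (vars (g p)) -> ~ In x (flat_map vars ls)) ->
  par_rel P Q (app_subst th (Fun f ls)) t ->
  (forall i a b, nth_error ls i = Some a ->
     par_rel (fun q => P (i :: q)) (fun q => Q (i :: q)) (app_subst th a) b ->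
     exists thi, decomposes a (fun q => P (i :: q)) (fun q => Q (i :: q))
                            (fun q => g (i :: q)) th thi b) ->
  exists th', decomposes (Fun f ls) P Q g th th' t.
Proof.
  intros H0 Hnd Hfresh Hpr IH.
  simpl in Hpr. apply par_rel_fun_inv in Hpr as [ts' [-> [Hlen [Hrange Hsub]]]]; auto.
  rewrite length_map in Hlen, Hrange.
  assert (Hspec : forall i, exists thi, forall a b, nth_error ls i = Some a ->
            nth_error ts' i = Some b -> decomposes a (fun q => P (i :: q))
              (fun q => Q (i :: q)) (fun q => g (i :: q)) th thi b).
  { intros i. destruct (nth_error ls i) as [a|] eqn:Ea; [|exists th; discriminate].
    destruct (result_arg ls ts' Hlen i a Ea) as [b Eb].
    destruct (IH i a b Ea) as [thi Hthi].
    { apply Hsub; auto. rewrite nth_error_map, Ea. reflexivity. }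
    exists thi. intros a' b' Ea' Eb'. rewrite Eb in Eb'.
    injection Ea' as <-. injection Eb' as <-. exact Hthi. }
  apply choice in Hspec as [Th HTh].
  destruct (glue_substs (fun z => ~ In z (flat_map vars ls))
              (fun i z => exists a, nth_error ls i = Some a /\ In z (vars a)) th Th)
    as [th' [Hout Hin]].
  { intros i z [a [Ea Hz]] Hn. apply Hn. eapply vars_nth; eauto. }
  { intros i j z [a [Ea Ha]] [b [Eb Hb]]. eapply linear_args_disjoint; eauto. }
  exists th'. unfold decomposes. rewrite repl_overlap_fun by auto.
  split; [|split; [|split]].
  - intros x. eapply glued_outside; eauto.
  - eapply glued_result; eauto.
  - eapply glued_step; eauto.
  - intros x q. eapply glued_free; eauto.
Qed.

Lemma decompose (l : tm) (P : pos -> Prop) (Q : pos -> tm -> tm -> Prop)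
  (th : subst) (t : tm) (g : pos -> tm) :
  NoDup (vars l) ->
  par_rel P Q (app_subst th l) t ->
  (forall p lp b, P p -> subterm l p = Some lp -> isfun lp ->
     Q p (app_subst th lp) b -> b = app_subst th (g p)) ->
  (forall p x, overlap l P p -> In x (vars (g p)) -> ~ In x (vars l)) ->
  exists th', decomposes l P Q g th th' t.
Proof.
  revert P Q t g. induction l as [x|f ls IH] using term_ind';
    intros P Q t g Hnd Hpr Hg Hfresh.
  - apply decompose_var. exact Hpr.
  - destruct (dec (P [])) as [H0|H0].
    + exists th. apply decompose_root; auto.
      intros HQ. eapply Hg; eauto. reflexivity. exists f, ls; auto.
    + apply decompose_fun; auto.
      intros i a b Ea Hpri. apply IH; auto.
      * eapply nth_error_In; eauto.
      * eapply linear_arg; eauto.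
      * intros p lp b' Hp Hs Hf HQ. eapply (Hg (i :: p)); eauto. simpl. rewrite Ea. auto.
      * intros p x [Hp HpF] Hx Hxa. eapply (Hfresh (i :: p)); eauto.
        -- split; auto. apply (posF_cons f ls i a p Ea); auto.
        -- simpl. eapply vars_nth; eauto.
Qed.

End LinearDecomposition.

Section Unification.
Context {F V : Type}.
Local Notation tm := (term F V).

Definition eqn : Type := (tm * tm)%type.
Definition unif (E : list eqn) (s : @subst F V) : Prop :=
  forall e, In e E -> app_subst s (fst e) = app_subst s (snd e).
Definition pvars (E : list eqn) : list V := flat_map (fun e => vars (fst e) ++ vars (snd e)) E.
Definition MGU (E : list eqn) (s0 : @subst F V) : Prop :=
  unif E s0 /\ (forall th, unif E th -> exists de, forall x, th x = app_subst de (s0 x)) /\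
  (forall y, ~ In y (pvars E) -> s0 y = Var y) /\
  (forall y z, In y (pvars E) -> In z (vars (s0 y)) -> In z (pvars E)).

(* Termination measure of Robinson's algorithm: number of variables, then size. *)
Definition nv (E : list eqn) : nat := length (nodup eqv (pvars E)).
Fixpoint size (t : tm) : nat :=
  match t with Var _ => 1 | Fun _ ts => S (list_sum (map size ts)) end.
Definition esize (E : list eqn) : nat :=
  list_sum (map (fun e => size (fst e) + size (snd e)) E).

Lemma MGU_equiv E1 E2 s : (forall s, unif E1 s <-> unif E2 s) ->
  (forall x, In x (pvars E1) <-> In x (pvars E2)) -> MGU E1 s -> MGU E2 s.
Proof.
  intros HU HP [H1 [H2 [H3 H4]]]. split; [|split; [|split]].
  - apply HU; auto.
  - intros th Hth. apply H2. apply HU; auto.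
  - intros y Hy. apply H3. rewrite HP. auto.
  - intros y z Hy Hz. apply HP. apply (H4 y); auto. apply HP; auto.
Qed.

Lemma nv_le E1 E2 : incl (pvars E1) (pvars E2) -> nv E1 <= nv E2.
Proof.
  intros H. unfold nv. apply NoDup_incl_length. apply NoDup_nodup.
  intros z Hz. apply nodup_In. apply nodup_In in Hz. auto.
Qed.

Lemma nv_lt E1 E2 x :
  incl (pvars E1) (pvars E2) -> In x (pvars E2) -> ~ In x (pvars E1) -> nv E1 < nv E2.
Proof.
  intros H Hx Hnx. unfold nv.
  change (length (x :: nodup eqv (pvars E1)) <= length (nodup eqv (pvars E2))).
  apply NoDup_incl_length.
  - constructor. rewrite nodup_In. auto. apply NoDup_nodup.
  - intros z [<-|Hz]; apply nodup_In; auto. apply nodup_In in Hz. auto.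
Qed.

Lemma size_in (a : tm) l : In a l -> size a <= list_sum (map size l).
Proof.
  induction l as [|b l IH]; simpl; intros H; [contradiction|destruct H as [<-|H]]; try lia.
  specialize (IH H). lia.
Qed.

Lemma size_var_le (th : subst) (t : tm) x : In x (vars t) -> size (th x) <= size (app_subst th t).
Proof.
  induction t as [y|f ts IH] using term_ind'; simpl; intros Hx.
  - destruct Hx as [<-|[]]. auto.
  - apply in_flat_map in Hx as [a [Ha Hx]]. specialize (IH a Ha Hx).
    pose proof (size_in (app_subst th a) (map (app_subst th) ts) (in_map _ _ _ Ha)). lia.
Qed.

(* Occurs check: x = b with x a proper subterm of b has no unifier. *)
Lemma occurs (th : subst) (b : tm) x :
  In x (vars b) -> b <> Var x -> size (th x) < size (app_subst th b).
Proof.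
  destruct b as [y|f ts]; simpl; intros Hx Hb.
  - destruct Hx as [<-|[]]. congruence.
  - apply in_flat_map in Hx as [a [Ha Hx]]. pose proof (size_var_le th a x Hx).
    pose proof (size_in (app_subst th a) (map (app_subst th) ts) (in_map _ _ _ Ha)). lia.
Qed.

Lemma unif_measure_ind (Pr : list eqn -> Prop) :
  (forall E, (forall E', nv E' < nv E -> Pr E') ->
             (forall E', nv E' <= nv E -> esize E' < esize E -> Pr E') -> Pr E) ->
  forall E, Pr E.
Proof.
  intros H.
  assert (G : forall n m E, nv E < n -> esize E < m -> Pr E).
  { induction n as [|n IHn]; [intros; lia|]. intros m. induction m as [|m IHm]; [intros; lia|].
    intros E Hn Hm. apply H.
    - intros E' HE'. apply (IHn (S (esize E'))); lia.
    - intros E' H1 H2. apply IHm; lia. }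
  intros E. apply (G (S (nv E)) (S (esize E))); lia.
Qed.

Lemma MGU_nil : MGU [] (@Var F V).
Proof.
  split; [|split; [|split]].
  - intros e [].
  - intros th _. exists th. intros x. reflexivity.
  - auto.
  - intros y z [].
Qed.

Definition single (x : V) (b : tm) : @subst F V := fun y => if eqv y x then b else Var y.

Definition elim_var (x : V) (b : tm) (E : list eqn) : list eqn :=
  map (fun e => (app_subst (single x b) (fst e), app_subst (single x b) (snd e))) E.

Lemma single_absorb (th : subst) x b (t : tm) :
  th x = app_subst th b -> app_subst th (app_subst (single x b) t) = app_subst th t.
Proof.
  intros Hx. rewrite app_subst_comp. apply app_subst_ext. intros y _. unfold single.
  destruct (eqv y x) as [->|]; auto.
Qed.

Lemma elim_var_pvars x (b : tm) E' z : ~ In x (vars b) ->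
  In z (pvars (elim_var x b E')) -> In z (pvars ((Var x, b) :: E')) /\ z <> x.
Proof.
  intros Hxb Hz. unfold elim_var, pvars in Hz.
  rewrite flat_map_concat_map, map_map, <- flat_map_concat_map in Hz.
  apply in_flat_map in Hz as [e [He Hz]]. simpl in Hz.
  assert (Hgen : forall t : tm, In t [fst e; snd e] ->
            In z (vars (app_subst (single x b) t)) -> In z (pvars ((Var x, b) :: E')) /\ z <> x).
  { intros t Ht Hzt. apply vars_subst in Hzt as [y [Hy Hzy]]. unfold single in Hzy.
    destruct (eqv y x) as [->|Hyx].
    - split; [unfold pvars; simpl; right; apply in_or_app; left; auto|].
      intros Hzx. subst. contradiction.
    - simpl in Hzy. destruct Hzy as [<-|[]]. split; auto. unfold pvars. simpl. right.
      apply in_or_app. right. apply in_flat_map. exists e. split; auto. apply in_or_app.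
      destruct Ht as [<-|[<-|[]]]; auto. }
  apply in_app_or in Hz as [Hz|Hz]; eapply Hgen; eauto; simpl; auto.
Qed.

Lemma elim_var_unif x (b : tm) E' th :
  unif ((Var x, b) :: E') th -> unif (elim_var x b E') th.
Proof.
  intros Hu e He. unfold elim_var in He. apply in_map_iff in He as [e0 [<- He0]]. simpl.
  assert (Hx : th x = app_subst th b) by (apply (Hu _ (or_introl eq_refl))).
  rewrite !single_absorb by auto. apply Hu. simpl; auto.
Qed.

Lemma var_elim x (b : tm) E' : b <> Var x -> (exists th, unif ((Var x, b) :: E') th) ->
  (forall E'', nv E'' < nv ((Var x, b) :: E') -> (exists th, unif E'' th) -> exists s, MGU E'' s) ->
  exists s, MGU ((Var x, b) :: E') s.
Proof.
  intros Hb [th Hth] IH.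
  set (E := (Var x, b) :: E'). set (E'' := elim_var x b E').
  assert (Hxb : ~ In x (vars b)).
  { intros Hx. pose proof (occurs th b x Hx Hb). specialize (Hth _ (or_introl eq_refl)).
    simpl in Hth. rewrite Hth in H. lia. }
  assert (HxE : In x (pvars E)) by (simpl; auto).
  assert (Hlt : nv E'' < nv E).
  { apply (nv_lt E'' E x); auto.
    - intros z Hz. apply (elim_var_pvars x b E' z Hxb Hz).
    - intros Hx. apply (elim_var_pvars x b E' x Hxb) in Hx as [_ []]. auto. }
  destruct (IH E'' Hlt (ex_intro _ th (elim_var_unif _ _ _ _ Hth))) as [s' [U1 [U2 [U3 U4]]]].
  set (s0 := fun y => if eqv y x then app_subst s' b else s' y).
  assert (Hs0 : forall t : tm, app_subst s0 t = app_subst s' (app_subst (single x b) t)).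
  { intros t. rewrite app_subst_comp. apply app_subst_ext. intros y _. unfold s0, single.
    destruct (eqv y x); auto. }
  assert (Hsbb : app_subst (single x b) b = b).
  { rewrite <- (app_subst_id b) at 3. apply app_subst_ext. intros y Hy. unfold single.
    destruct (eqv y x) as [->|]; auto. contradiction. }
  exists s0. split; [|split; [|split]].
  - intros e [<-|He].
    + simpl. unfold s0. destruct (eqv x x); [|congruence]. rewrite Hs0, Hsbb. auto.
    + rewrite !Hs0. apply (U1 (app_subst (single x b) (fst e), app_subst (single x b) (snd e))).
      apply in_map_iff. exists e. auto.
  - intros th' Hu. destruct (U2 th' (elim_var_unif _ _ _ _ Hu)) as [de Hde]. exists de. intros y.
    unfold s0. destruct (eqv y x) as [->|]; auto.
    assert (Hx : th' x = app_subst th' b) by (apply (Hu _ (or_introl eq_refl))).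
    rewrite Hx, app_subst_comp. apply app_subst_ext. auto.
  - intros y Hy. unfold s0. destruct (eqv y x) as [->|Hyx]. contradiction.
    apply U3. intros Hy'. apply (elim_var_pvars x b E' y Hxb) in Hy'. tauto.
  - intros y z Hy Hz. unfold s0 in Hz.
    assert (Hs' : forall w, In z (vars (s' w)) -> In w (pvars E) -> In z (pvars E)).
    { intros w Hzw Hw. destruct (in_dec eqv w (pvars E'')) as [Hw''|Hw''].
      - apply (elim_var_pvars x b E' z Hxb). eapply U4; eauto.
      - rewrite U3 in Hzw by auto. destruct Hzw as [<-|[]]. auto. }
    destruct (eqv y x) as [->|Hyx]; [|eauto].
    apply vars_subst in Hz as [w [Hw Hzw]]. apply (Hs' w); auto.
    simpl. right. apply in_or_app. auto.
Qed.

Lemma combine_unif (as_ bs : list tm) (h : tm -> tm) : length as_ = length bs ->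
  (map h as_ = map h bs <-> forall a b, In (a, b) (combine as_ bs) -> h a = h b).
Proof.
  revert bs; induction as_ as [|a as_ IH]; intros [|b bs] Hl; simpl in *; try discriminate.
  - split; auto. intros _ a b [].
  - injection Hl as Hl. split.
    + intros H. injection H as H1 H2. intros a' b' [Hab|Hin].
      * injection Hab as <- <-. auto.
      * apply (IH bs Hl); auto.
    + intros H. f_equal. apply H; auto. apply (IH bs Hl). intros. apply H. auto.
Qed.

Lemma combine_pvars (as_ bs : list tm) z : length as_ = length bs ->
  (In z (pvars (combine as_ bs)) <-> In z (flat_map vars as_ ++ flat_map vars bs)).
Proof.
  revert bs; induction as_ as [|a as_ IH]; intros [|b bs] Hl; simpl in *; try discriminate.
  - tauto.
  - injection Hl as Hl. unfold pvars in *. simpl. specialize (IH bs Hl).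
    rewrite !in_app_iff in *. tauto.
Qed.

Lemma combine_esize (as_ bs : list tm) : length as_ = length bs ->
  esize (combine as_ bs) = list_sum (map size as_) + list_sum (map size bs).
Proof.
  revert bs; induction as_ as [|a as_ IH]; intros [|b bs] Hl; simpl in *; try discriminate; auto.
  injection Hl as Hl. unfold esize in *. simpl. rewrite IH; auto. lia.
Qed.

Lemma pvars_app E1 E2 : pvars (E1 ++ E2) = pvars E1 ++ pvars E2.
Proof. unfold pvars. apply flat_map_app. Qed.

Lemma esize_app E1 E2 : esize (E1 ++ E2) = esize E1 + esize E2.
Proof. unfold esize. rewrite map_app, list_sum_app. auto. Qed.

Lemma unif_cons e E s :
  unif (e :: E) s <-> app_subst s (fst e) = app_subst s (snd e) /\ unif E s.
Proof.
  split.
  - intros H. split. apply H; simpl; auto. intros e' He'. apply H; simpl; auto.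
  - intros [H1 H2] e' [<-|He']; auto.
Qed.

Lemma unif_app E1 E2 s : unif (E1 ++ E2) s <-> unif E1 s /\ unif E2 s.
Proof.
  split.
  - intros H. split; intros e He; apply H; apply in_or_app; auto.
  - intros [H1 H2] e He. apply in_app_or in He as [He|He]; auto.
Qed.

Lemma decompose_eqn f (as_ bs : list tm) E' th :
  unif ((Fun f as_, Fun f bs) :: E') th -> length as_ = length bs /\
  (forall s, unif (combine as_ bs ++ E') s <-> unif ((Fun f as_, Fun f bs) :: E') s).
Proof.
  intros Hth. pose proof (proj1 (proj1 (unif_cons _ _ _) Hth)) as Hh. simpl in Hh.
  injection Hh as Hmap.
  assert (Hl : length as_ = length bs).
  { apply (f_equal (@length _)) in Hmap. rewrite !length_map in Hmap. auto. }
  split; auto. intros s. rewrite unif_app, unif_cons. simpl. split.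
  - intros [H1 H2]. split; auto. f_equal. apply combine_unif; auto.
    intros a b Hab. apply (H1 (a, b)). auto.
  - intros [H1 H2]. split; auto. injection H1 as H1. intros [a b] Hab.
    apply (combine_unif as_ bs _ Hl); auto.
Qed.

Lemma MGU_trivial_eqn x E' s : MGU E' s -> MGU ((Var x, Var x) :: E') s.
Proof.
  intros [U1 [U2 [U3 U4]]]. split; [|split; [|split]].
  - apply unif_cons. auto.
  - intros th Hth. apply U2. apply unif_cons in Hth. tauto.
  - intros y Hy. apply U3. intros H. apply Hy. simpl. auto.
  - intros y z Hy Hz. simpl in Hy.
    destruct (in_dec eqv y (pvars E')) as [Hy'|Hy'].
    + simpl. right. right. eapply U4; eauto.
    + rewrite U3 in Hz by auto. destruct Hz as [<-|[]]. auto.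
Qed.

Theorem robinson (E : list eqn) : (exists th, unif E th) -> exists s, MGU E s.
Proof.
  revert E. apply (unif_measure_ind (fun E => (exists th, unif E th) -> exists s, MGU E s)).
  intros E IHv IHs Hex.
  destruct E as [|[a b] E']. { exists Var. apply MGU_nil. }
  destruct a as [x|f as_].
  - destruct (dec (b = Var x)) as [->|Hb]; [|apply var_elim; auto].
    destruct (IHs E') as [s Hs].
    + apply nv_le. intros z Hz. unfold pvars in *. simpl. auto.
    + unfold esize. simpl. lia.
    + destruct Hex as [th Hth]. exists th. apply unif_cons in Hth. tauto.
    + exists s. apply MGU_trivial_eqn. exact Hs.
  - destruct b as [y|g bs].
    + destruct (var_elim y (Fun f as_) E') as [s Hs].
      * discriminate.
      * destruct Hex as [th Hth]. exists th. apply unif_cons in Hth as [H1 H2].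
        apply unif_cons. simpl in *. auto.
      * intros E'' Hlt Hex''. apply IHv; auto. eapply Nat.lt_le_trans; [exact Hlt|].
        apply nv_le. intros z Hz. unfold pvars in *. simpl in *.
        rewrite !in_app_iff in *. simpl. tauto.
      * exists s. revert Hs. apply MGU_equiv.
        -- intros s'. rewrite !unif_cons. simpl. intuition.
        -- intros z. unfold pvars. simpl. rewrite !in_app_iff. simpl. tauto.
    + destruct Hex as [th Hth].
      assert (Hfg : f = g).
      { pose proof (proj1 (proj1 (unif_cons _ _ _) Hth)) as Hh. simpl in Hh. congruence. }
      subst g. destruct (decompose_eqn f as_ bs E' th Hth) as [Hl Hequiv].
      destruct (IHs (combine as_ bs ++ E')) as [s Hs].
      * apply nv_le. intros z Hz. rewrite pvars_app in Hz. apply in_app_or in Hz as [Hz|Hz].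
        -- apply combine_pvars in Hz; auto. unfold pvars. simpl. rewrite !in_app_iff in *. tauto.
        -- unfold pvars in *. simpl. rewrite !in_app_iff. tauto.
      * rewrite esize_app, combine_esize; auto. unfold esize. simpl. lia.
      * exists th. apply Hequiv. exact Hth.
      * exists s. revert Hs. apply MGU_equiv; auto.
        intros z. rewrite pvars_app, in_app_iff, combine_pvars by auto.
        unfold pvars. simpl. rewrite !in_app_iff. tauto.
Qed.

End Unification.

Section Renaming.
Context {F V : Type}.
Local Notation tm := (term F V).

Fixpoint allpos (t : tm) : list pos :=
  [] :: match t with
        | Var _ => []
        | Fun _ ts => concat (mapi (fun i a => map (cons i) (allpos a)) 0 ts)
        end.

Lemma allpos_complete (t : tm) p : subterm t p <> None -> In p (allpos t).
Proof.
  revert t; induction p as [|i p IH]; intros t H; [destruct t; simpl; auto|].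
  destruct t as [x|f ts]; simpl in H; [exfalso; apply H; reflexivity|].
  destruct (nth_error ts i) as [a|] eqn:E; [|exfalso; apply H; reflexivity]. simpl.
  right. apply in_concat. exists (map (cons i) (allpos a)). split.
  - apply nth_error_In with i. rewrite nth_error_mapi, E. reflexivity.
  - apply in_map. apply IH. auto.
Qed.

Lemma fresh_list (Vinf : forall l : list V, exists x, ~ In x l) n (avoid : list V) :
  exists Z, length Z = n /\ NoDup Z /\ forall z, In z Z -> ~ In z avoid.
Proof.
  induction n as [|n [Z [H1 [H2 H3]]]].
  - exists []. split; [reflexivity|split]. constructor. intros z [].
  - destruct (Vinf (avoid ++ Z)) as [x Hx]. exists (x :: Z). split; [simpl; auto|split].
    + constructor; auto. intros H. apply Hx. apply in_or_app. auto.
    + intros z [<-|Hz]; auto. intros H. apply Hx. apply in_or_app. auto.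
Qed.

Fixpoint sw (X Z : list V) (y : V) : V :=
  match X, Z with
  | x :: X', z :: Z' => if eqv y x then z else if eqv y z then x else sw X' Z' y
  | _, _ => y
  end.

Lemma sw_range X Z y : sw X Z y = y \/ In (sw X Z y) X \/ In (sw X Z y) Z.
Proof.
  revert Z; induction X as [|x X IH]; intros [|z Z]; simpl; auto.
  destruct (eqv y x); [simpl; auto|]. destruct (eqv y z); [simpl; auto|].
  destruct (IH Z) as [H|[H|H]]; auto.
Qed.

Lemma sw_inv X Z y : NoDup X -> NoDup Z -> (forall v, In v X -> ~ In v Z) -> sw X Z (sw X Z y) = y.
Proof.
  revert Z; induction X as [|x X IH]; intros [|z Z] HX HZ Hd; simpl; auto.
  inversion HX; inversion HZ; subst.
  assert (Hxz : x <> z) by (intros <-; apply (Hd x); simpl; auto).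
  destruct (eqv y x) as [->|Hyx].
  - destruct (eqv z x); [congruence|]. destruct (eqv z z); congruence.
  - destruct (eqv y z) as [->|Hyz].
    + destruct (eqv x x); congruence.
    + set (w := sw X Z y).
      assert (Hwx : w <> x).
      { destruct (sw_range X Z y) as [H|[H|H]]; unfold w; [rewrite H; auto| |].
        - intros E; rewrite E in H; auto.
        - intros E; rewrite E in H. apply (Hd x); simpl; auto. }
      assert (Hwz : w <> z).
      { destruct (sw_range X Z y) as [H|[H|H]]; unfold w; [rewrite H; auto| |].
        - intros E; rewrite E in H. apply (Hd z); simpl; auto.
        - intros E; rewrite E in H; auto. }
      destruct (eqv w x); [congruence|]. destruct (eqv w z); [congruence|].
      apply IH; auto. intros v Hv Hv'. apply (Hd v); simpl; auto.
Qed.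

Lemma sw_img X Z x : length X = length Z -> (forall v, In v X -> ~ In v Z) ->
  In x X -> In (sw X Z x) Z.
Proof.
  revert Z; induction X as [|a X IH]; intros [|z Z] Hl Hd Hx; simpl in *;
    try discriminate; try contradiction.
  destruct (eqv x a) as [->|Hxa]; auto.
  destruct Hx as [<-|Hx]; [congruence|].
  destruct (eqv x z) as [->|Hxz].
  - exfalso. apply (Hd z); auto.
  - right. apply IH; auto. intros v Hv Hv'. apply (Hd v); auto.
Qed.

Lemma rename_apart (Vinf : forall l : list V, exists x, ~ In x l) (qs : list pos)
  (X : pos -> list V) :
  forall avoid : list V,
  exists pi : pos -> V -> V,
    (forall q y, pi q (pi q y) = y) /\
    (forall q x, In q qs -> In x (X q) -> ~ In (pi q x) avoid) /\
    (forall q1 q2 x1 x2, In q1 qs -> In q2 qs -> q1 <> q2 ->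
       In x1 (X q1) -> In x2 (X q2) -> pi q1 x1 <> pi q2 x2).
Proof.
  induction qs as [|q qs IH]; intros avoid.
  - exists (fun _ y => y). split; [auto|split]; intros; contradiction.
  - set (Xn := nodup eqv (X q)).
    destruct (fresh_list Vinf (length Xn) (avoid ++ Xn)) as [Z [HZl [HZnd HZav]]].
    assert (Hd : forall v, In v Xn -> ~ In v Z).
    { intros v Hv Hv'. apply (HZav v Hv'). apply in_or_app. auto. }
    destruct (IH (avoid ++ Z)) as [pi [H1 [H2 H3]]].
    exists (fun q' => if list_eq_dec Nat.eq_dec q' q then sw Xn Z else pi q').
    assert (Himg : forall x, In x (X q) -> In (sw Xn Z x) Z).
    { intros x Hx. apply sw_img; auto. apply nodup_In. auto. }
    split; [|split].
    + intros q' y. destruct (list_eq_dec Nat.eq_dec q' q); auto.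
      apply sw_inv; auto. apply NoDup_nodup.
    + intros q' x Hq' Hx. destruct (list_eq_dec Nat.eq_dec q' q) as [->|Hne].
      * intros Hav. apply (HZav _ (Himg x Hx)). apply in_or_app. auto.
      * destruct Hq' as [<-|Hq']; [congruence|]. intros Hav.
        apply (H2 q' x Hq' Hx). apply in_or_app. auto.
    + intros q1 q2 x1 x2 Hq1 Hq2 Hne Hx1 Hx2.
      destruct (list_eq_dec Nat.eq_dec q1 q) as [->|Hne1];
        destruct (list_eq_dec Nat.eq_dec q2 q) as [->|Hne2].
      * congruence.
      * destruct Hq2 as [<-|Hq2]; [congruence|]. intros E. apply (H2 q2 x2 Hq2 Hx2). rewrite <- E.
        apply in_or_app. right. auto.
      * destruct Hq1 as [<-|Hq1]; [congruence|]. intros E. apply (H2 q1 x1 Hq1 Hx1). rewrite E.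
        apply in_or_app. right. auto.
      * destruct Hq1 as [<-|Hq1]; [congruence|]. destruct Hq2 as [<-|Hq2]; [congruence|]. auto.
Qed.

Definition ren (pi : V -> V) (rl : @rule F V) : @rule F V :=
  mkRule (app_subst (fun x => Var (pi x)) (lhs rl)) (app_subst (fun x => Var (pi x)) (rhs rl)).

Lemma ren_invol (pi : V -> V) (t : tm) : (forall y, pi (pi y) = y) ->
  app_subst (fun x => Var (pi x)) (app_subst (fun x => Var (pi x)) t) = t.
Proof.
  intros H. rewrite app_subst_comp. simpl. rewrite <- (app_subst_id t) at 2.
  apply app_subst_ext. intros x _. rewrite H. auto.
Qed.

Lemma variant_ren pi (rl : @rule F V) : (forall y, pi (pi y) = y) -> variant (ren pi rl) rl.
Proof. intros H. exists pi, pi. auto. Qed.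

Lemma variant_ren_back pi (rl rl0 : @rule F V) :
  (forall y, pi (pi y) = y) -> variant (ren pi rl) rl0 -> variant rl rl0.
Proof.
  intros Hpi [a [a' [H1 [H2 [H3 H4]]]]].
  exists (fun x => pi (a x)), (fun x => a' (pi x)). split; [|split; [|split]].
  - intros x. rewrite Hpi. auto.
  - intros x. rewrite H2. auto.
  - rewrite <- (ren_invol pi (lhs rl) Hpi).
    change (app_subst (fun x => Var (pi x)) (lhs (ren pi rl)) =
            app_subst (fun x => Var (pi (a x))) (lhs rl0)).
    rewrite H3, app_subst_comp. reflexivity.
  - rewrite <- (ren_invol pi (rhs rl) Hpi).
    change (app_subst (fun x => Var (pi x)) (rhs (ren pi rl)) =
            app_subst (fun x => Var (pi (a x))) (rhs rl0)).
    rewrite H4, app_subst_comp. reflexivity.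
Qed.

End Renaming.

Section RewriteSteps.
Context {F V : Type}.
Local Notation tm := (term F V).

Definition rule_redex (R : @rule F V -> Prop) (rho : pos -> @rule F V) (p : pos) (a b : tm)
  : Prop :=
  R (rho p) /\ exists mu, a = app_subst mu (lhs (rho p)) /\ b = app_subst mu (rhs (rho p)).

Definition redex (R : @rule F V -> Prop) (a b : tm) : Prop :=
  exists rl, R rl /\ exists mu, a = app_subst mu (lhs rl) /\ b = app_subst mu (rhs rl).

Lemma par_step_with_rel R P rho (s t : tm) :
  par_step_with R P rho s t <-> par_rel P (rule_redex R rho) s t.
Proof.
  split; intros [H1 [H2 H3]]; (split; [|split]); auto.
  - intros p Hp. destruct (H2 p Hp) as [HR [mu [Hs Ht]]].
    exists (app_subst mu (lhs (rho p))), (app_subst mu (rhs (rho p))).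
    split; auto. split; auto. split; eauto.
  - intros p Hp. destruct (H2 p Hp) as [a [b [Ha [Hb [HR [mu [-> ->]]]]]]]. split; eauto.
Qed.

Lemma rule_redex_redex R rho p (a b : tm) : rule_redex R rho p a b -> redex R a b.
Proof. intros [HR Hmu]. exists (rho p). auto. Qed.

Lemma par_rel_par_step R P (s t : tm) : par_rel P (fun _ => redex R) s t -> par_step R P s t.
Proof.
  intros [H1 [H2 H3]].
  assert (Hc : forall p, exists rl, P p -> exists a b, subterm s p = Some a /\
              subterm t p = Some b /\ rule_redex R (fun _ => rl) p a b).
  { intros p. destruct (dec (P p)) as [Hp|Hp]; [|exists (mkRule s s); tauto].
    destruct (H2 p Hp) as [a [b [Ha [Hb [rl [HR Hmu]]]]]].
    exists rl. intros _. exists a, b. split; [|split; [|split]]; auto. }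
  apply choice in Hc as [rho Hrho].
  exists rho. apply par_step_with_rel. split; [|split]; auto.
Qed.

Lemma par_step_empty R (s : tm) : par_step R (fun _ => False) s s.
Proof. exists (fun _ => mkRule s s). apply par_step_with_rel. apply par_rel_nil; auto. Qed.

Lemma rule_redex_vars R rho p (a b : tm) x :
  TRS R -> rule_redex R rho p a b -> In x (vars b) -> In x (vars a).
Proof.
  intros HR [HRp [m [-> ->]]] Hx. apply vars_subst in Hx as [y [Hy Hxy]].
  apply vars_subst. exists y. split; auto. apply (proj2 (HR _ HRp)). auto.
Qed.

End RewriteSteps.

Section OrthogonalPeaks.
Context {F V : Type}.
Local Notation tm := (term F V).

(* Decomposing the step gives t = lθ' with
   μx ⇒ θ'x for every variable x; hence t →ε rθ' and u = rμ ⇒ rθ', the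
   redexes of the latter being copies of redexes of the former. *)
Lemma orthogonal_disjoint_case (R : @rule F V -> Prop) (lr : @rule F V)
  (P : pos -> Prop) (rho : pos -> @rule F V) (s t u : tm) (mu : subst) :
  TRS R -> NoDup (vars (lhs lr)) ->
  (forall x, In x (vars (rhs lr)) -> In x (vars (lhs lr))) ->
  par_rel P (rule_redex R rho) s t ->
  s = app_subst mu (lhs lr) -> u = app_subst mu (rhs lr) ->
  (forall p, P p -> ~ posF (lhs lr) p) ->
  exists (v : tm) (P' : pos -> Prop),
    (t = v \/ root_step lr t v) /\ par_step R P' u v /\
    (forall x, vars_at v P' x -> vars_at s P x).
Proof.
  intros HR Hll Hrl Hpar Hs Hu Hdisj.
  set (l := lhs lr) in *. set (r := rhs lr) in *.
  assert (Hnone : forall p, ~ overlap l P p) by (intros p [Hp HF]; eapply Hdisj; eauto).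
  assert (Hres : forall p lp b, P p -> subterm l p = Some lp -> isfun lp ->
            rule_redex R rho p (app_subst mu lp) b -> b = app_subst mu l).
  { intros p lp b Hp Hsub [f [ts ->]]. exfalso. apply (Hdisj p Hp). exists f, ts. auto. }
  assert (Hfresh : forall p x, overlap l P p -> In x (vars l) -> ~ In x (vars l)).
  { intros p x Hp. exfalso. eapply Hnone; eauto. }
  rewrite Hs in Hpar.
  destruct (decompose l P (rule_redex R rho) mu t (fun _ => l) Hll Hpar Hres Hfresh)
    as [th' [_ [Ht [_ Hvar]]]].
  rewrite repl_none in Ht by auto.
  assert (Hpos : forall x, exists q, In x (vars l) -> subterm l q = Some (Var x)).
  { intros x. destruct (dec (In x (vars l))) as [Hx|Hx]; [|exists []; tauto].
    destruct (var_pos l x Hx) as [q Hq]. eauto. }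
  apply choice in Hpos as [posx Hposx].
  assert (Hfree : forall x, In x (vars l) -> free l P x).
  { intros x Hx. split; auto. intros p lp Hp Hsub [f [ts ->]]. exfalso.
    apply (Hdisj p Hp). exists f, ts. auto. }
  exists (app_subst th' r),
    (fun p => exists q x r', p = q ++ r' /\ subterm r q = Some (Var x) /\ P (posx x ++ r')).
  split; [right; exists th'; auto|split].
  - apply par_rel_par_step. rewrite Hu.
    apply (par_rel_subst (redex R) (fun x r' => P (posx x ++ r'))). intros x Hx.
    assert (Hxl : In x (vars l)) by auto.
    eapply par_rel_mono; [|apply (Hvar x (posx x) (Hposx x Hxl) (Hfree x Hxl))].
    intros p a b _. apply rule_redex_redex.
  - intros x [p [t' [[q [y [r' [-> [Hq HPy]]]]] [Hsub Hx]]]].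
    rewrite (subterm_subst_var th' r q y r' Hq) in Hsub.
    assert (Hyl : In y (vars l)) by (apply Hrl; eapply subterm_vars; eauto; simpl; auto).
    assert (Ht' : subterm t (posx y ++ r') = Some t').
    { rewrite Ht, (subterm_subst_var th' l (posx y) y r' (Hposx y Hyl)). auto. }
    destruct Hpar as [_ [Hredex _]]. destruct (Hredex _ HPy) as [a [b [Ha [Hb HQ]]]].
    rewrite Ht' in Hb. injection Hb as <-. rewrite <- Hs in Ha.
    exists (posx y ++ r'), a. split; auto. split; auto. eapply rule_redex_vars; eauto.
Qed.

Lemma orthogonal_root_case (R : @rule F V -> Prop) (lr : @rule F V)
  (P : pos -> Prop) (rho : pos -> @rule F V) (s t u : tm) (mu : subst) :
  (forall x, In x (vars (rhs lr)) -> In x (vars (lhs lr))) ->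
  par_rel P (rule_redex R rho) s t ->
  s = app_subst mu (lhs lr) -> u = app_subst mu (rhs lr) ->
  P [] -> variant (rho []) lr -> t = u.
Proof.
  intros Hrl Hpar Hs Hu H0 [pi [pi' [_ [_ [Hl Hr]]]]].
  apply par_rel_root in Hpar as [_ [_ [m [Hsm Htm]]]]; auto.
  rewrite Hl, app_subst_comp in Hsm. rewrite Hr, app_subst_comp in Htm.
  rewrite Hs in Hsm. pose proof (match_unique _ _ _ Hsm) as Hag.
  rewrite Htm, Hu. symmetry. apply app_subst_ext. intros x Hx. apply Hag. auto.
Qed.

End OrthogonalPeaks.

Section CriticalPeak.
Context {F V : Type}.
Local Notation tm := (term F V).

Lemma overlap_problem (l : tm) (P0 : pos -> Prop) (rho0 : pos -> @rule F V) :
  (forall p, P0 p -> posF l p) ->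
  exists E : list eqn,
    (forall sg, unif E sg <-> unifies P0 rho0 l sg) /\
    (forall z, In z (pvars E) -> exists p lp, P0 p /\ subterm l p = Some lp /\
                 (In z (vars (lhs (rho0 p))) \/ In z (vars lp))).
Proof.
  intros HF.
  assert (Hpart : forall p, exists lp, P0 p -> subterm l p = Some lp).
  { intros p. destruct (subterm l p) as [lp|] eqn:E; [exists lp; auto|].
    exists l. intros Hp. destruct (HF p Hp) as [f [ts Hf]]. congruence. }
  apply choice in Hpart as [lpart Hlpart].
  exists (map (fun p => (lhs (rho0 p), lpart p))
            (filter (fun p => if dec (P0 p) then true else false) (allpos l))).
  assert (HinE : forall e, In e (map (fun p => (lhs (rho0 p), lpart p))
            (filter (fun p => if dec (P0 p) then true else false) (allpos l))) <->
            exists p, P0 p /\ e = (lhs (rho0 p), lpart p)).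
  { intros e. rewrite in_map_iff. split.
    - intros [p [<- Hp]]. apply filter_In in Hp as [_ Hp].
      destruct (dec (P0 p)); [|discriminate]. eauto.
    - intros [p [Hp ->]]. exists p. split; auto. apply filter_In. split.
      + apply allpos_complete. rewrite Hlpart by auto. discriminate.
      + destruct (dec (P0 p)); tauto. }
  split.
  - intros sg. split.
    + intros H p Hp. exists (lpart p). split; auto.
      apply (H (lhs (rho0 p), lpart p)). apply HinE. eauto.
    + intros H e He. apply HinE in He as [p [Hp ->]]. destruct (H p Hp) as [lp [Hlp Heq]].
      rewrite Hlpart in Hlp by auto. injection Hlp as <-. auto.
  - intros z Hz. unfold pvars in Hz. apply in_flat_map in Hz as [e [He Hz]].
    apply HinE in He as [p [Hp ->]]. exists p, (lpart p). split; auto. split; auto.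
    apply in_app_or in Hz. auto.
Qed.

(* Rules at the overlap positions can be renamed apart from ℓ → r and from
   each other (V is infinite and there are finitely many such positions). *)
Lemma rename_overlap_apart (V_infinite : forall l : list V, exists x, ~ In x l)
  (lr : @rule F V) (P0 : pos -> Prop) (rho : pos -> @rule F V) :
  (forall p, P0 p -> posF (lhs lr) p) ->
  exists pi : pos -> V -> V,
    (forall p y, pi p (pi p y) = y) /\
    (forall p x, P0 p -> rule_vars (rho p) x -> ~ rule_vars lr (pi p x)) /\
    (forall p q x y, P0 p -> P0 q -> p <> q -> rule_vars (rho p) x -> rule_vars (rho q) y ->
       pi p x <> pi q y).
Proof.
  intros HF.
  assert (Hall : forall p, P0 p -> In p (allpos (lhs lr))).
  { intros p Hp. destruct (HF p Hp) as [f [ts Hf]]. apply allpos_complete. congruence. }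
  assert (Hrv : forall (rl : @rule F V) x,
            rule_vars rl x <-> In x (vars (lhs rl) ++ vars (rhs rl))).
  { intros rl x. rewrite in_app_iff. reflexivity. }
  destruct (rename_apart V_infinite (allpos (lhs lr))
              (fun p => vars (lhs (rho p)) ++ vars (rhs (rho p))) (vars (lhs lr) ++ vars (rhs lr)))
    as [pi [Hinv [Havoid Hdis]]].
  exists pi. split; [exact Hinv|split].
  - intros p x Hp Hx Hlr. apply Hrv in Hx, Hlr. exact (Havoid p x (Hall p Hp) Hx Hlr).
  - intros p q x y Hp Hq Hne Hx Hy. apply Hrv in Hx, Hy. auto.
Qed.

Lemma extend_outside (s0 de th th' : @subst F V) (D : list V) (Fr : V -> Prop) :
  (forall y, ~ In y D -> s0 y = Var y) ->
  (forall y z, In y D -> In z (vars (s0 y)) -> In z D) ->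
  (forall z, Fr z -> ~ In z D) ->
  (forall z, th z = app_subst de (s0 z)) -> (forall z, ~ Fr z -> th' z = th z) ->
  exists tau : @subst F V, (forall z, app_subst tau (s0 z) = th' z) /\
    (forall z, Fr z -> tau z = th' z) /\ (forall z, ~ Fr z -> tau z = de z).
Proof.
  intros Hid Hclosed HFr Hde Hth'.
  exists (fun z => if dec (Fr z) then th' z else de z).
  split; [|split]; intros z; destruct (dec (Fr z)) as [Hf|Hf]; try tauto.
  - rewrite Hid by auto. simpl. destruct (dec (Fr z)); tauto.
  - rewrite Hth', Hde by auto. apply app_subst_ext. intros w Hw.
    destruct (dec (Fr w)) as [Hfw|]; auto. exfalso. apply (HFr w Hfw).
    destruct (in_dec eqv z D) as [Hz|Hz]; [eapply Hclosed; eauto|].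
    rewrite Hid in Hw by auto. destruct Hw as [<-|[]]. contradiction.
Qed.

Variables (R : @rule F V -> Prop) (lr : @rule F V) (P : pos -> Prop)
  (rho : pos -> @rule F V) (s t : tm) (mu : @subst F V).
Hypothesis HR : TRS R.
Hypothesis Hll : NoDup (vars (lhs lr)).
Hypothesis Hpar : par_rel P (rule_redex R rho) s t.
Hypothesis Hs : s = app_subst mu (lhs lr).

Variable pi : pos -> V -> V.
Hypothesis pi_invol : forall p y, pi p (pi p y) = y.
Hypothesis pi_apart :
  forall p x, overlap (lhs lr) P p -> rule_vars (rho p) x -> ~ rule_vars lr (pi p x).
Hypothesis pi_disjoint : forall p q x y, overlap (lhs lr) P p -> overlap (lhs lr) P q ->
  p <> q -> rule_vars (rho p) x -> rule_vars (rho q) y -> pi p x <> pi q y.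

Variable MU : pos -> @subst F V.
Hypothesis MU_match : forall p, P p ->
  subterm s p = Some (app_subst (MU p) (lhs (rho p))) /\
  subterm t p = Some (app_subst (MU p) (rhs (rho p))).

Local Notation l := (lhs lr).
Local Notation P0 := (overlap (lhs lr) P).

Definition rho0 (p : pos) : @rule F V := ren (pi p) (rho p).

Lemma rho0_vars p z : rule_vars (rho0 p) z -> exists x, rule_vars (rho p) x /\ z = pi p x.
Proof.
  intros [Hz|Hz]; simpl in Hz; apply vars_subst in Hz as [x [Hx Hzx]]; simpl in Hzx;
    destruct Hzx as [<-|[]]; exists x; split; auto; [left|right]; auto.
Qed.

Lemma rho0_apart p z : P0 p -> rule_vars (rho0 p) z -> ~ rule_vars lr z.
Proof. intros Hp Hz. destruct (rho0_vars p z Hz) as [x [Hx ->]]. auto. Qed.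

Lemma rho0_disjoint p q z : P0 p -> P0 q -> p <> q ->
  rule_vars (rho0 p) z -> ~ rule_vars (rho0 q) z.
Proof.
  intros Hp Hq Hne Hz Hz'. destruct (rho0_vars p z Hz) as [x [Hx ->]].
  destruct (rho0_vars q _ Hz') as [y [Hy Hxy]]. exact (pi_disjoint p q x y Hp Hq Hne Hx Hy Hxy).
Qed.

(* A single substitution θ instantiating ℓ to s and each ρ0 p to the redex
   at p: since the variables are apart, μ and the MU p ∘ pi p glue. *)
Lemma combined_matcher : exists th : @subst F V,
  (forall z, In z (vars l) -> th z = mu z) /\
  (forall p, P0 p -> app_subst th (lhs (rho0 p)) = app_subst (MU p) (lhs (rho p)) /\
                     app_subst th (rhs (rho0 p)) = app_subst (MU p) (rhs (rho p))).
Proof.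
  destruct (glue_substs (fun z => In z (vars l)) (fun p z => P0 p /\ rule_vars (rho0 p) z)
              mu (fun p z => MU p (pi p z))) as [th [Hl Hrho]].
  { intros p z [Hp Hz] Hzl. eapply rho0_apart; eauto. left. auto. }
  { intros p q z [Hp Hzp] [Hq Hzq]. apply NNPP. intros Hne.
    exact (rho0_disjoint p q z Hp Hq Hne Hzp Hzq). }
  exists th. split; auto. intros p Hp.
  split; simpl; rewrite app_subst_comp; apply app_subst_ext; intros x Hx; simpl;
    rewrite (Hrho p); try rewrite pi_invol; auto; split; auto;
    [left|right]; simpl; apply vars_subst; exists x; simpl; auto.
Qed.

Section WithMatcher.
Variable th : @subst F V.
Hypothesis th_l : forall z, In z (vars l) -> th z = mu z.
Hypothesis th_rho0 : forall p, P0 p ->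
  app_subst th (lhs (rho0 p)) = app_subst (MU p) (lhs (rho p)) /\
  app_subst th (rhs (rho0 p)) = app_subst (MU p) (rhs (rho p)).

Lemma s_instance : s = app_subst th l.
Proof. rewrite Hs. apply app_subst_ext. intros z Hz. symmetry. auto. Qed.

(* θ solves the overlap problem: ρ0(p)θ = s|_p = ℓ|_p θ. *)
Lemma matcher_unifies : unifies P0 rho0 l th.
Proof.
  intros p Hp. destruct Hp as [HPp [f [ts Hf]]]. exists (Fun f ts). split; auto.
  rewrite (proj1 (th_rho0 p (conj HPp (ex_intro _ f (ex_intro _ ts Hf))))).
  pose proof (subterm_subst th l p _ Hf) as Hx.
  rewrite <- s_instance, (proj1 (MU_match p HPp)) in Hx. congruence.
Qed.

(* An overlapping redex lp·θ of the step produces θ(rhs (ρ0 p)), because the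
   matcher of a rule is determined on the variables of its left-hand side. *)
Lemma overlap_result p lp b : P p -> subterm l p = Some lp -> isfun lp ->
  rule_redex R rho p (app_subst th lp) b -> b = app_subst th (rhs (rho0 p)).
Proof.
  intros Hp Hsub [f [ts Hf]] [HRp [m [Hm ->]]]. subst lp.
  assert (HP0 : P0 p) by (split; auto; exists f, ts; auto).
  rewrite (proj2 (th_rho0 p HP0)).
  pose proof (subterm_subst th l p _ Hsub) as Hx.
  rewrite <- s_instance, (proj1 (MU_match p Hp)), Hm in Hx. injection Hx as Hx.
  apply app_subst_ext. intros x Hx'. apply (match_unique (lhs (rho p))); auto.
  apply (proj2 (HR _ HRp)). auto.
Qed.

End WithMatcher.

Lemma critical_peak_of_mgu (s0 : @subst F V) :
  (exists p, P0 p) -> ~ ((forall p, P p <-> p = []) /\ variant (rho []) lr) ->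
  is_mgu P0 rho0 l s0 ->
  par_critical_peak R (fun rl => rl = lr)
    (app_subst s0 (repl P0 (fun p => rhs (rho0 p)) l)) P0
    (app_subst s0 l) (app_subst s0 (rhs lr)).
Proof.
  intros Hne Hnroot Hmgu.
  assert (Hpp : pairwise_parallel P0) by (intros p q [Hp _] [Hq _]; apply Hpar; auto).
  exists lr, rho0, s0.
  split; [|split; [|split; [|split; [|split; [|split;
    [|split; [|split; [|split; [|split; [|split]]]]]]]]]]; auto.
  - exists lr. split; auto. exists (fun x => x), (fun x => x).
    do 2 (split; auto). split; symmetry; apply app_subst_id.
  - intros p [_ HF]. exact HF.
  - intros p [Hp _]. exists (rho p). split.
    + destruct (proj1 (proj2 Hpar) p Hp) as [a [b [_ [_ [HRp _]]]]]. exact HRp.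
    + apply variant_ren. auto.
  - exact rho0_apart.
  - exact rho0_disjoint.
  - intros Hall Hv. apply Hnroot. split; [|eapply variant_ren_back; eauto].
    assert (H0 : P []) by (apply Hall; auto). intros p. split.
    + apply pairwise_parallel_root; auto. apply Hpar.
    + intros ->. auto.
  - destruct (par_rel_repl P0 (fun p => rhs (rho0 p)) s0 l (fun p H => proj2 H) Hpp)
      as [H1 [H2 H3]].
    split; [|split; [|split]]; auto.
    + intros p Hp. destruct (H2 p Hp) as [a [b [Ha _]]]. congruence.
    + intros p Hp. destruct (H2 p Hp) as [a [b [_ [Hb ->]]]]. auto.
Qed.

(* The glued matcher θ unifies the overlap
   problem, so it factors through its mgu σ0 as θ = σ0 δ; this gives the
   critical peak and σ := δ.  Decomposing the step from s = lθ yields θ',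
   and τ := θ' on the free variables of ℓ, δ elsewhere, satisfies σ0 τ = θ'. *)
Lemma critical_peak_instance (u : tm) :
  (forall x, In x (vars (rhs lr)) -> In x (vars l)) -> u = app_subst mu (rhs lr) ->
  (exists p, P0 p) -> ~ ((forall p, P p <-> p = []) /\ variant (rho []) lr) ->
  exists (s0 t0 u0 : tm) (Q0 : pos -> Prop) (sg tau : @subst F V),
    par_critical_peak R (fun rl => rl = lr) t0 Q0 s0 u0 /\
    s = app_subst sg s0 /\ t = app_subst tau t0 /\ u = app_subst sg u0 /\
    par_step_subst R sg tau /\
    par_step R (fun p => P p /\ ~ Q0 p) (app_subst sg t0) (app_subst tau t0) /\
    (forall p, Q0 p -> P p).
Proof.
  intros Hrl Hu Hne Hnroot.
  destruct combined_matcher as [th [Hthl Hthr]].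
  destruct (overlap_problem l P0 rho0) as [E [HunifE HvarsE]]; [intros p []; auto|].
  assert (Hth : unif E th) by (apply HunifE, matcher_unifies; auto).
  destruct (robinson E (ex_intro _ th Hth)) as [s0 [U1 [U2 [U3 U4]]]].
  destruct (U2 th Hth) as [de Hde].
  destruct (decompose l P (rule_redex R rho) th t (fun p => rhs (rho0 p)) Hll)
    as [th' [S1 [S2 [S3 S4]]]].
  { rewrite <- (s_instance th); auto. }
  { intros p lp b Hp. apply overlap_result; auto. }
  { intros p x Hp Hx Hxl. apply (rho0_apart p x Hp); [right|left]; auto. }
  assert (Hfree_E : forall z, free l P z -> ~ In z (pvars E)).
  { intros z [Hzl Hfr] Hz. destruct (HvarsE z Hz) as [p [lp [Hp [Hlp [Hz'|Hz']]]]].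
    - apply (rho0_apart p z Hp); left; auto.
    - destruct Hp as [HPp [f [ts Hf]]]. rewrite Hf in Hlp. injection Hlp as <-.
      apply (Hfr p (Fun f ts) HPp Hf); auto. exists f, ts. auto. }
  destruct (extend_outside s0 de th th' (pvars E) (free l P) U3 U4 Hfree_E Hde S1)
    as [tau [Hst [Htau_free Htau_de]]].
  assert (Hsd : forall z, app_subst de (s0 z) = th z) by (intros; symmetry; auto).
  set (t0 := repl P0 (fun p => rhs (rho0 p)) l).
  exists (app_subst s0 l), (app_subst s0 t0), (app_subst s0 (rhs lr)), P0, de, tau.
  split; [|split; [|split; [|split; [|split; [|split]]]]].
  - apply critical_peak_of_mgu; auto. split; [apply HunifE; auto|].
    intros th2 Hth2. apply U2, HunifE, Hth2.
  - rewrite app_subst_comp, (s_instance th) by auto. apply app_subst_ext. auto.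
  - rewrite app_subst_comp, S2. apply app_subst_ext. auto.
  - rewrite app_subst_comp, Hu. apply app_subst_ext. intros z Hz. rewrite Hsd.
    symmetry. apply Hthl, Hrl, Hz.
  - intros z. destruct (dec (free l P z)) as [Hf|Hf].
    + destruct (var_pos l z (proj1 Hf)) as [q Hq].
      exists (fun r' => P (q ++ r')), (fun r' => rho (q ++ r')). apply par_step_with_rel.
      rewrite Htau_free by auto.
      replace (de z) with (th z) by (rewrite <- Hsd, U3 by auto; reflexivity).
      exact (S4 z q Hq Hf).
    + rewrite Htau_de by auto.
      exists (fun _ => False). apply par_step_empty.
  - exists rho. apply par_step_with_rel. rewrite !app_subst_comp.
    rewrite (app_subst_ext (fun x => app_subst de (s0 x)) th) by auto.
    rewrite (app_subst_ext (fun x => app_subst tau (s0 x)) th') by auto.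
    eapply par_rel_ext; [|exact S3]. intros p. unfold overlap. tauto.
  - intros p [Hp _]. auto.
Qed.

End CriticalPeak.

Theorem lemma3 (F V : Type)
  (V_infinite : forall l : list V, exists x, ~ In x l)
  (R : @rule F V -> Prop) (HR : TRS R)
  (lr : @rule F V) (Hlr : wf_rule lr) (Hll : left_linear lr)
  (s t u : term F V) (P : pos -> Prop) (rho : pos -> @rule F V)
  (Hpar : par_step_with R P rho s t) (Hroot : root_step lr s u) :
  (orthogonal_peak lr P rho ->
     exists (v : term F V) (P' : pos -> Prop),
       (t = v \/ root_step lr t v) /\ par_step R P' u v /\
       (forall x, vars_at v P' x -> vars_at s P x)) /\
  (~ orthogonal_peak lr P rho ->
     exists (s0 t0 u0 : term F V) (P0 : pos -> Prop) (sg tau : subst),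
       par_critical_peak R (fun rl => rl = lr) t0 P0 s0 u0 /\
       s = app_subst sg s0 /\ t = app_subst tau t0 /\ u = app_subst sg u0 /\
       par_step_subst R sg tau /\
       par_step R (fun p => P p /\ ~ P0 p) (app_subst sg t0) (app_subst tau t0) /\
       (forall p, P0 p -> P p)).
Proof.
  destruct Hroot as [mu [Hs Hu]]. destruct Hlr as [_ Hrl].
  apply par_step_with_rel in Hpar. split.
  - intros [Hdisj|[Hroot Hvar]].
    + eapply orthogonal_disjoint_case; eauto.
    + exists u, (fun _ => False). split; [left|split].
      * eapply orthogonal_root_case; eauto. apply Hroot. reflexivity.
      * apply par_step_empty.
      * intros x [p [_ [[] _]]].
  - intros Hno.
    assert (Hne : exists p, overlap (lhs lr) P p).
    { apply NNPP. intros Hn. apply Hno. left. intros p Hp HF. apply Hn. exists p. split; auto. }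
    destruct (rename_overlap_apart V_infinite lr (overlap (lhs lr) P) rho)
      as [pi [Hinv [Hapart Hdisj]]]; [intros p []; auto|].
    assert (Hmatch : forall p, exists m, P p ->
              subterm s p = Some (app_subst m (lhs (rho p))) /\
              subterm t p = Some (app_subst m (rhs (rho p)))).
    { intros p. destruct (dec (P p)) as [Hp|Hp]; [|exists mu; tauto].
      destruct Hpar as [_ [Hredex _]].
      destruct (Hredex p Hp) as [a [b [Ha [Hb [_ [m [-> ->]]]]]]]. eauto. }
    apply choice in Hmatch as [MU HMU].
    eapply (critical_peak_instance R lr P rho s t mu HR Hll Hpar Hs pi Hinv Hapart Hdisj MU HMU);
      eauto.
    intros Hall. apply Hno. right. exact Hall.
Qed.
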